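(* Let $k\in\{1,2,\dots\}\cup\{\infty\}$. (1) For every $C^k$-atlas $\mathcal{U}$ on $\mathbb{R}$ there exists a chain-like $C^k$-atlas $\mathcal{V}$ on $\mathbb{R}$ which is $C^k$-compatible with $\mathcal{U}$. (2) If $\mathcal{V}$ is a chain-like $C^k$-atlas on $\mathbb{R}$, then there exists a homeomorphism $\omega\colon\mathbb{R}\to\mathbb{R}$ such that the chart $(\mathbb{R},\omega)$ is $C^k$-compatible with $\mathcal{V}$.
   Context: Here $\mathbb{R}$ is regarded as a topological space. A chart on $\mathbb{R}$ is a homeomorphism $\varphi\colon U\to\varphi(U)$ of an open $U\subset\mathbb{R}$ onto an open subset of $\mathbb{R}$; charts $(U,\varphi),(V,\psi)$ are $C^k$-compatible if $U\cap V=\varnothing$ or $\psi\circ\varphi^{-1}\colon\varphi(U\cap V)\to\psi(U\cap V)$ is a $C^k$-diffeomorphism; a $C^k$-atlas is a family of pairwise compatible charts whose domains cover $\mathbb{R}$; a chart or atlas is $C^k$-compatible with an atlas if their union is a (partial) family of pairwise $C^k$-compatible charts. Two charts $(U,\varphi),(V,\psi)$ are $C^k$-joinable if they are $C^k$-compatible and there are reals $a<b<c<d$ with $\varphi(U)=(a,c)$, $\varphi(U\cap V)=\psi(U\cap V)=(b,c)$, $\psi(V)=(b,d)$. A countable $C^k$-atlas $\{(V_i,\psi_i)\}_{i\in\mathbb{Z}}$ on $\mathbb{R}$ is chain-like if for every $i\in\mathbb{Z}$: (G1) $(V_i,\psi_i)$ and $(V_{i+1},\psi_{i+1})$ are $C^k$-joinable,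 and (G2) $V_j\cap V_i\cap V_{i+1}=\varnothing$ for all $j\neq i,i+1$. *)

From Stdlib Require Import Reals ZArith.
From Coquelicot Require Import Coquelicot.
Open Scope R_scope.

(* Smoothness index k in {1,2,...} ∪ {∞}: [Some n] is n, [None] is ∞. *)
Definition smoothness := option nat.
Definition valid_smoothness (k : smoothness) : Prop :=
  match k with Some n => (1 <= n)%nat | None => True end.
Definition order_le (n : nat) (k : smoothness) : Prop :=
  match k with Some m => (n <= m)%nat | None => True end.

Definition img (f : R -> R) (A : R -> Prop) : R -> Prop :=
  fun y => exists x, A x /\ f x = y.
Definition inter (A B : R -> Prop) : R -> Prop := fun x => A x /\ B x.

Definition Ck_on (k : smoothness) (A : R -> Prop) (f : R -> R) : Prop :=
  forall n, order_le n k -> forall x, A x ->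
    ex_derive_n f n x /\ continuous (Derive_n f n) x.

Definition is_chart (U : R -> Prop) (phi : R -> R) : Prop :=
  open U /\
  (forall x y, U x -> U y -> phi x = phi y -> x = y) /\
  (forall x, U x -> continuous phi x) /\
  open (img phi U) /\
  (exists phiinv : R -> R,
      (forall x, U x -> phiinv (phi x) = x) /\
      (forall y, img phi U y -> continuous phiinv y)).

(* C^k-compatibility of two charts: U ∩ V = ∅, or the transition map
   psi ∘ phi^{-1} : phi(U∩V) -> psi(U∩V) is a C^k-diffeomorphism, i.e. it is
   (the restriction of) a C^k map g whose inverse is (the restriction of)
   a C^k map h. *)
Definition Ck_compatible (k : smoothness) (U : R -> Prop) (phi : R -> R)
    (V : R -> Prop) (psi : R -> R) : Prop :=
  (forall x, ~ (U x /\ V x)) \/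
  exists g h : R -> R,
    (forall x, U x -> V x -> g (phi x) = psi x) /\
    (forall x, U x -> V x -> h (psi x) = phi x) /\
    Ck_on k (img phi (inter U V)) g /\
    Ck_on k (img psi (inter U V)) h.

Definition Ck_atlas (k : smoothness) (I : Type) (U : I -> R -> Prop)
    (phi : I -> R -> R) : Prop :=
  (forall i, is_chart (U i) (phi i)) /\
  (forall i j, Ck_compatible k (U i) (phi i) (U j) (phi j)) /\
  (forall x, exists i, U i x).

(* Two atlases are C^k-compatible: their union is pairwise compatible
   (within each atlas this already holds, so it amounts to cross-compatibility). *)
Definition atlases_compatible (k : smoothness)
    (I : Type) (U : I -> R -> Prop) (phi : I -> R -> R)
    (J : Type) (V : J -> R -> Prop) (psi : J -> R -> R) : Prop :=
  forall i j, Ck_compatible k (U i) (phi i) (V j) (psi j) /\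
              Ck_compatible k (V j) (psi j) (U i) (phi i).

Definition set_eq (A B : R -> Prop) : Prop := forall x, A x <-> B x.
Definition open_itv (a b : R) : R -> Prop := fun y => a < y < b.

Definition Ck_joinable (k : smoothness) (U : R -> Prop) (phi : R -> R)
    (V : R -> Prop) (psi : R -> R) : Prop :=
  Ck_compatible k U phi V psi /\
  exists a b c d : R, a < b /\ b < c /\ c < d /\
    set_eq (img phi U) (open_itv a c) /\
    set_eq (img phi (inter U V)) (open_itv b c) /\
    set_eq (img psi (inter U V)) (open_itv b c) /\
    set_eq (img psi V) (open_itv b d).

Definition chain_like (k : smoothness) (V : Z -> R -> Prop)
    (psi : Z -> R -> R) : Prop :=
  Ck_atlas k Z V psi /\
  (forall i : Z, Ck_joinable k (V i) (psi i) (V (i + 1)%Z) (psi (i + 1)%Z)) /\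
  (forall i j : Z, j <> i -> j <> (i + 1)%Z ->
     forall x, ~ (V j x /\ V i x /\ V (i + 1)%Z x)).

Definition homeomorphism (w : R -> R) : Prop :=
  (forall x, continuous w x) /\
  exists winv : R -> R,
    (forall x, winv (w x) = x) /\ (forall y, w (winv y) = y) /\
    (forall y, continuous winv y).

(* Both parts follow from one fact: every C^k atlas on R is compatible with a global
   chart, i.e. a homeomorphism w : R -> R. Indeed the strips w^-1 (n, n + 2), all with the
   chart w, then form a chain-like atlas compatible with the given one, and a chain-like
   atlas is an atlas.

   Call f regular at x when, in every chart around x, f is a C^k function of the chart
   coordinate with nonvanishing derivative. Near each point a chart or its negative is
   regular and increasing. Two regular increasing functions on overlapping intervals are
   merged by a smooth cutoff built from exp (-1/t), after shifting one of them by a large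
   constant: the merged function is then still increasing, and a sign computation shows
   that its derivative in any chart cannot vanish. A supremum argument gives regular
   increasing functions on every bounded interval; gluing them along the exhaustion of R by
   (-n-1, n+1), while pushing the values at +-(n + 1/4) beyond +-n, yields a regular
   increasing surjection w. Its inverse is C^k in each chart by the inverse function
   theorem. *)

From Stdlib Require Import Reals Ranalysis5 ZArith Lra Lia.
From Stdlib Require Import FunctionalExtensionality ClassicalEpsilon Classical.
From Coquelicot Require Import Coquelicot.
Open Scope R_scope.

(** * Epsilon-delta topology on R *)

Lemma locally_Rabs (x : R) (P : R -> Prop) :
  locally x P <-> exists e, 0 < e /\ forall y, Rabs (y - x) < e -> P y.
Proof.
  split.
  - intros [e He]. exists e. split; [apply cond_pos|]. intros y Hy. apply He, Hy.
  - intros [e [He H]]. exists (mkposreal e He). intros y Hy. apply H, Hy.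
Qed.

Lemma open_Rabs (A : R -> Prop) :
  open A <-> forall x, A x -> exists e, 0 < e /\ forall y, Rabs (y - x) < e -> A y.
Proof. split; intros H x Hx; apply locally_Rabs, H, Hx. Qed.

Lemma continuous_Rabs (f : R -> R) (x : R) :
  continuous f x <-> forall e, 0 < e ->
    exists d, 0 < d /\ forall y, Rabs (y - x) < d -> Rabs (f y - f x) < e.
Proof.
  split.
  - intros H e He.
    apply locally_Rabs, (proj1 (filterlim_locally f (f x)) H (mkposreal e He)).
  - intros H. apply filterlim_locally. intros [e He]. apply locally_Rabs, (H e He).
Qed.

Lemma open_Rabs_ball (c e : R) : open (fun y => Rabs (y - c) < e).
Proof.
  apply open_Rabs. intros y Hy. exists (e - Rabs (y - c)). split; [lra|].
  intros z Hz. pose proof (Rabs_triang (z - y) (y - c)).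
  replace (z - y + (y - c)) with (z - c) in H by ring. lra.
Qed.

Lemma continuous_Ropp (x : R) : continuous Ropp x.
Proof. exact (continuous_opp (fun y : R => y) x (continuous_id x)). Qed.

(** * C^k functions on open sets *)

Lemma Derive_n_S_Derive (f : R -> R) (n : nat) :
  Derive_n f (S n) = Derive_n (Derive f) n.
Proof.
  induction n as [|n IH]; [reflexivity|].
  apply functional_extensionality. intro x.
  change (Derive (Derive_n f (S n)) x = Derive (Derive_n (Derive f) n) x).
  rewrite IH. reflexivity.
Qed.

Lemma ex_derive_n_SS (f : R -> R) (n : nat) (x : R) :
  ex_derive_n f (S (S n)) x <-> ex_derive_n (Derive f) (S n) x.
Proof.
  simpl ex_derive_n. change (Derive (Derive_n f n)) with (Derive_n f (S n)).
  rewrite Derive_n_S_Derive. tauto.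
Qed.

Lemma Ck_on_O (A : R -> Prop) (f : R -> R) :
  Ck_on (Some 0%nat) A f <-> forall x, A x -> continuous f x.
Proof.
  split.
  - intros H x Hx. exact (proj2 (H 0%nat (le_n 0) x Hx)).
  - intros H n Hn x Hx. simpl in Hn. replace n with 0%nat by lia.
    split; [exact I|]. apply H, Hx.
Qed.

Lemma Ck_on_S (A : R -> Prop) (n : nat) (f : R -> R) :
  Ck_on (Some (S n)) A f <->
  (forall x, A x -> ex_derive f x) /\ Ck_on (Some n) A (Derive f).
Proof.
  split.
  - intros H. split.
    + intros x Hx. exact (proj1 (H 1%nat ltac:(simpl; lia) x Hx)).
    + intros m Hm x Hx. simpl in Hm.
      destruct (H (S m) ltac:(simpl; lia) x Hx) as [Hex Hc]. split.
      * destruct m; [exact I|]. exact (proj1 (ex_derive_n_SS f m x) Hex).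
      * rewrite <- Derive_n_S_Derive. exact Hc.
  - intros [Hex Hd] m Hm x Hx. simpl in Hm. destruct m as [|m].
    + split; [exact I|]. exact (ex_derive_continuous f x (Hex x Hx)).
    + destruct (Hd m ltac:(simpl; lia) x Hx) as [Hexm Hc]. split.
      * destruct m; [exact (Hex x Hx)|]. exact (proj2 (ex_derive_n_SS f m x) Hexm).
      * rewrite Derive_n_S_Derive. exact Hc.
Qed.

Lemma Ck_on_Some (k : smoothness) (A : R -> Prop) (f : R -> R) :
  Ck_on k A f <-> forall n, order_le n k -> Ck_on (Some n) A f.
Proof.
  split.
  - intros H n Hn m Hm x Hx. apply H; [|exact Hx]. destruct k; simpl in *; lia.
  - intros H n Hn x Hx. apply (H n Hn n); [simpl; lia|exact Hx].
Qed.

Lemma Ck_on_le (n m : nat) (A : R -> Prop) (f : R -> R) :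
  (m <= n)%nat -> Ck_on (Some n) A f -> Ck_on (Some m) A f.
Proof. intros Hmn H p Hp. apply H. simpl in *; lia. Qed.

Lemma Ck_on_subset (k : smoothness) (A B : R -> Prop) (f : R -> R) :
  (forall x, B x -> A x) -> Ck_on k A f -> Ck_on k B f.
Proof. intros HBA H n Hn x Hx. apply H; auto. Qed.

Lemma Ck_on_local (k : smoothness) (A : R -> Prop) (f : R -> R) :
  (forall x, A x -> exists e, 0 < e /\ Ck_on k (fun s => Rabs (s - x) < e) f) ->
  Ck_on k A f.
Proof.
  intros H n Hn x Hx. destruct (H x Hx) as [e [He Hf]].
  apply Hf; [exact Hn|]. rewrite Rminus_eq_0, Rabs_R0. exact He.
Qed.

Lemma Ck_on_ext (k : smoothness) (A : R -> Prop) (f g : R -> R) :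
  open A -> (forall x, A x -> f x = g x) -> Ck_on k A f -> Ck_on k A g.
Proof.
  intros HA Heq H n Hn x Hx. destruct (H n Hn x Hx) as [Hex Hc].
  assert (Hloc : forall y, A y -> locally y (fun t => f t = g t)).
  { intros y Hy. apply (filter_imp A); [exact Heq|exact (HA y Hy)]. }
  split.
  - exact (ex_derive_n_ext_loc f g n x (Hloc x Hx) Hex).
  - apply (continuous_ext_loc _ (Derive_n f n)); [|exact Hc].
    apply (filter_imp A); [|exact (HA x Hx)].
    intros y Hy. apply Derive_n_ext_loc, Hloc, Hy.
Qed.

Lemma Ck_on_ex_derive (k : smoothness) (A : R -> Prop) (f : R -> R) (x : R) :
  order_le 1 k -> Ck_on k A f -> A x -> ex_derive f x.
Proof. intros Hk H Hx. exact (proj1 (H 1%nat Hk x Hx)). Qed.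

Lemma Ck_on_continuous_Derive (k : smoothness) (A : R -> Prop) (f : R -> R) (x : R) :
  order_le 1 k -> Ck_on k A f -> A x -> continuous (Derive f) x.
Proof. intros Hk H Hx. exact (proj2 (H 1%nat Hk x Hx)). Qed.

Section Cn_algebra.
Variables (A : R -> Prop) (HA : open A).

Lemma Cn_const (n : nat) (c : R) : Ck_on (Some n) A (fun _ => c).
Proof.
  revert c. induction n as [|n IH]; intros c.
  - apply Ck_on_O. intros. apply continuous_const.
  - apply Ck_on_S. split; [intros; apply ex_derive_const|].
    replace (Derive (fun _ : R => c)) with (fun _ : R => 0); [apply IH|].
    apply functional_extensionality. intro x. rewrite Derive_const. reflexivity.
Qed.

Lemma Cn_id (n : nat) : Ck_on (Some n) A (fun x => x).
Proof.
  destruct n as [|n].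
  - apply Ck_on_O. intros. apply continuous_id.
  - apply Ck_on_S. split; [intros; apply ex_derive_id|].
    replace (Derive (fun x : R => x)) with (fun _ : R => 1); [apply Cn_const|].
    apply functional_extensionality. intro x. rewrite Derive_id. reflexivity.
Qed.

Lemma Cn_plus (n : nat) (f g : R -> R) :
  Ck_on (Some n) A f -> Ck_on (Some n) A g -> Ck_on (Some n) A (fun x => f x + g x).
Proof.
  revert f g. induction n as [|n IH]; intros f g Hf Hg.
  - apply Ck_on_O. intros x Hx.
    exact (continuous_plus f g x (proj1 (Ck_on_O A f) Hf x Hx) (proj1 (Ck_on_O A g) Hg x Hx)).
  - apply Ck_on_S in Hf as [Hf1 Hf2]. apply Ck_on_S in Hg as [Hg1 Hg2].
    apply Ck_on_S. split; [intros x Hx; exact (ex_derive_plus f g x (Hf1 x Hx) (Hg1 x Hx))|].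
    apply (Ck_on_ext _ A (fun x => Derive f x + Derive g x)); auto.
    intros x Hx. rewrite Derive_plus; auto.
Qed.

Lemma Cn_mult (n : nat) (f g : R -> R) :
  Ck_on (Some n) A f -> Ck_on (Some n) A g -> Ck_on (Some n) A (fun x => f x * g x).
Proof.
  revert f g. induction n as [|n IH]; intros f g Hf Hg.
  - apply Ck_on_O. intros x Hx.
    exact (continuous_mult f g x (proj1 (Ck_on_O A f) Hf x Hx) (proj1 (Ck_on_O A g) Hg x Hx)).
  - pose proof (Ck_on_le (S n) n A f (le_S _ _ (le_n n)) Hf) as Hf0.
    pose proof (Ck_on_le (S n) n A g (le_S _ _ (le_n n)) Hg) as Hg0.
    apply Ck_on_S in Hf as [Hf1 Hf2]. apply Ck_on_S in Hg as [Hg1 Hg2].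
    apply Ck_on_S. split; [intros x Hx; exact (ex_derive_mult f g x (Hf1 x Hx) (Hg1 x Hx))|].
    apply (Ck_on_ext _ A (fun x => Derive f x * g x + f x * Derive g x)).
    + exact HA.
    + intros x Hx. rewrite Derive_mult; auto.
    + apply Cn_plus; auto.
Qed.

Lemma Cn_comp (n : nat) (B : R -> Prop) (f g : R -> R) :
  (forall x, A x -> B (f x)) ->
  Ck_on (Some n) A f -> Ck_on (Some n) B g -> Ck_on (Some n) A (fun x => g (f x)).
Proof.
  intros HAB. revert f g HAB. induction n as [|n IH]; intros f g HAB Hf Hg.
  - apply Ck_on_O. intros x Hx. apply continuous_comp.
    + exact (proj1 (Ck_on_O A f) Hf x Hx).
    + exact (proj1 (Ck_on_O B g) Hg (f x) (HAB x Hx)).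
  - pose proof (Ck_on_le (S n) n A f (le_S _ _ (le_n n)) Hf) as Hf0.
    apply Ck_on_S in Hf as [Hf1 Hf2]. apply Ck_on_S in Hg as [Hg1 Hg2].
    apply Ck_on_S. split; [intros x Hx; exact (ex_derive_comp g f x (Hg1 (f x) (HAB x Hx)) (Hf1 x Hx))|].
    apply (Ck_on_ext _ A (fun x => Derive f x * Derive g (f x))).
    + exact HA.
    + intros x Hx. rewrite (Derive_comp g f x); auto.
    + apply Cn_mult; [exact Hf2|]. apply IH; auto.
Qed.

Lemma Cn_inv (n : nat) (f : R -> R) :
  (forall x, A x -> f x <> 0) -> Ck_on (Some n) A f -> Ck_on (Some n) A (fun x => / f x).
Proof.
  intros Hnz. revert f Hnz. induction n as [|n IH]; intros f Hnz Hf.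
  - apply Ck_on_O. intros x Hx.
    apply continuous_Rinv_comp; [exact (proj1 (Ck_on_O A f) Hf x Hx)|exact (Hnz x Hx)].
  - pose proof (Ck_on_le (S n) n A f (le_S _ _ (le_n n)) Hf) as Hf0.
    apply Ck_on_S in Hf as [Hf1 Hf2].
    apply Ck_on_S. split; [intros; apply ex_derive_inv; auto|].
    apply (Ck_on_ext _ A (fun x => (-1) * Derive f x * (/ f x * / f x))).
    + exact HA.
    + intros x Hx. rewrite Derive_inv; auto. field. auto.
    + apply Cn_mult; [apply Cn_mult; [apply Cn_const|exact Hf2]|].
      apply Cn_mult; apply IH; auto.
Qed.

End Cn_algebra.

Section Ck_algebra.
Variables (k : smoothness) (A : R -> Prop) (HA : open A).

Lemma Ck_on_const (c : R) : Ck_on k A (fun _ => c).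
Proof. apply Ck_on_Some. intros. apply Cn_const. Qed.

Lemma Ck_on_id : Ck_on k A (fun x => x).
Proof. apply Ck_on_Some. intros. apply Cn_id. Qed.

Lemma Ck_on_plus (f g : R -> R) :
  Ck_on k A f -> Ck_on k A g -> Ck_on k A (fun x => f x + g x).
Proof.
  intros Hf Hg. apply Ck_on_Some. intros n Hn.
  apply Cn_plus; [exact HA|exact (proj1 (Ck_on_Some _ _ _) Hf n Hn)|exact (proj1 (Ck_on_Some _ _ _) Hg n Hn)].
Qed.

Lemma Ck_on_mult (f g : R -> R) :
  Ck_on k A f -> Ck_on k A g -> Ck_on k A (fun x => f x * g x).
Proof.
  intros Hf Hg. apply Ck_on_Some. intros n Hn.
  apply Cn_mult; [exact HA|exact (proj1 (Ck_on_Some _ _ _) Hf n Hn)|exact (proj1 (Ck_on_Some _ _ _) Hg n Hn)].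
Qed.

Lemma Ck_on_opp (f : R -> R) : Ck_on k A f -> Ck_on k A (fun x => - f x).
Proof.
  intros Hf. apply (Ck_on_ext _ _ (fun x => -1 * f x)); [exact HA|intros; ring|].
  apply Ck_on_mult; [apply Ck_on_const|exact Hf].
Qed.

Lemma Ck_on_scal_plus (a b : R) (f : R -> R) :
  Ck_on k A f -> Ck_on k A (fun x => a * f x + b).
Proof.
  intros Hf. apply Ck_on_plus; [|apply Ck_on_const]. apply Ck_on_mult; [apply Ck_on_const|exact Hf].
Qed.

Lemma Ck_on_comp (B : R -> Prop) (f g : R -> R) : (forall x, A x -> B (f x)) ->
  Ck_on k A f -> Ck_on k B g -> Ck_on k A (fun x => g (f x)).
Proof.
  intros HAB Hf Hg. apply Ck_on_Some. intros n Hn.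
  apply (Cn_comp A HA n B); [exact HAB|exact (proj1 (Ck_on_Some _ _ _) Hf n Hn)|exact (proj1 (Ck_on_Some _ _ _) Hg n Hn)].
Qed.

Lemma Ck_on_inv (f : R -> R) :
  (forall x, A x -> f x <> 0) -> Ck_on k A f -> Ck_on k A (fun x => / f x).
Proof.
  intros Hnz Hf. apply Ck_on_Some. intros n Hn.
  apply Cn_inv; [exact HA|exact Hnz|exact (proj1 (Ck_on_Some _ _ _) Hf n Hn)].
Qed.

End Ck_algebra.

Lemma Rabs_Rinv_minus_lt (l q e : R) : l <> 0 -> 0 < e ->
  Rabs (q - l) < Rmin (Rabs l / 2) (e * (Rabs l * Rabs l) / 2) -> Rabs (/ q - / l) < e.
Proof.
  intros Hl He H.
  pose proof (Rmin_l (Rabs l / 2) (e * (Rabs l * Rabs l) / 2)).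
  pose proof (Rmin_r (Rabs l / 2) (e * (Rabs l * Rabs l) / 2)).
  assert (Hl0 : 0 < Rabs l) by (apply Rabs_pos_lt; auto).
  assert (Hq : Rabs l / 2 < Rabs q).
  { pose proof (Rabs_triang_inv l q). rewrite Rabs_minus_sym in H. lra. }
  assert (Hq0 : q <> 0) by (intro; subst; rewrite Rabs_R0 in Hq; lra).
  replace (/ q - / l) with ((l - q) / (q * l)) by (field; auto).
  unfold Rdiv. rewrite Rabs_mult, Rabs_inv, Rabs_mult, Rabs_minus_sym.
  apply (Rmult_lt_reg_r (Rabs q * Rabs l)); [nra|].
  rewrite Rmult_assoc, Rinv_l by nra.
  assert (0 < e * ((Rabs q - Rabs l / 2) * Rabs l)) by (apply Rmult_lt_0_compat; nra).
  assert (e * (Rabs q * Rabs l) = e * ((Rabs q - Rabs l / 2) * Rabs l) + e * (Rabs l * Rabs l) / 2)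
    by field.
  lra.
Qed.

Lemma is_derive_local_inverse (f g : R -> R) (t0 l : R) :
  is_derive f (g t0) l -> l <> 0 -> continuous g t0 ->
  (exists d, 0 < d /\ forall t, Rabs (t - t0) < d -> f (g t) = t) ->
  is_derive g t0 (/ l).
Proof.
  intros Hf Hl Hg [d0 [Hd0 Hid]].
  apply is_derive_Reals in Hf. apply is_derive_Reals. intros e He.
  assert (Hl0 : 0 < Rabs l) by (apply Rabs_pos_lt; auto).
  assert (He' : 0 < Rmin (Rabs l / 2) (e * (Rabs l * Rabs l) / 2))
    by (apply Rmin_pos; [lra|apply Rdiv_lt_0_compat; [apply Rmult_lt_0_compat; nra|lra]]).
  destruct (Hf _ He') as [eta Heta].
  destruct (proj1 (continuous_Rabs g t0) Hg eta (cond_pos eta)) as [d1 [Hd1 Hc]].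
  exists (mkposreal _ (Rmin_pos _ _ Hd0 Hd1)). intros h Hh Hhd. simpl in Hhd.
  pose proof (Rmin_l d0 d1). pose proof (Rmin_r d0 d1).
  set (q := g (t0 + h) - g t0).
  assert (Hq : Rabs q < eta) by (apply Hc; replace (t0 + h - t0) with h by ring; lra).
  assert (E1 : f (g (t0 + h)) = t0 + h) by (apply Hid; replace (t0 + h - t0) with h by ring; lra).
  assert (E0 : f (g t0) = t0) by (apply Hid; rewrite Rminus_eq_0, Rabs_R0; lra).
  assert (Hq0 : q <> 0).
  { intro Hq0. unfold q in Hq0. replace (g (t0 + h)) with (g t0) in E1 by lra. lra. }
  specialize (Heta q Hq0 Hq).
  replace (g t0 + q) with (g (t0 + h)) in Heta by (unfold q; ring).
  rewrite E1, E0 in Heta. replace (t0 + h - t0) with h in Heta by ring.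
  replace (q / h) with (/ (h / q)) by (field; auto).
  apply Rabs_Rinv_minus_lt; auto.
Qed.

Lemma Cn_local_inverse (n : nat) (A B : R -> Prop) (f g : R -> R) : open B ->
  (forall t, B t -> A (g t) /\ f (g t) = t) -> (forall t, B t -> continuous g t) ->
  Ck_on (Some (S n)) A f -> (forall s, A s -> Derive f s <> 0) -> Ck_on (Some (S n)) B g.
Proof.
  intros HB Hinv Hgc Hf Hnz.
  pose proof Hf as [Hf1 _]%Ck_on_S.
  assert (Hder : forall t, B t -> is_derive g t (/ Derive f (g t))).
  { intros t Ht. apply (is_derive_local_inverse f g).
    - apply Derive_correct, Hf1, Hinv, Ht.
    - apply Hnz, Hinv, Ht.
    - apply Hgc, Ht.
    - destruct (proj1 (open_Rabs B) HB t Ht) as [d [Hd Hd2]].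
      exists d. split; [exact Hd|]. intros t' Ht'. apply Hinv, Hd2, Ht'. }
  assert (Hm : forall m, (m <= S n)%nat -> Ck_on (Some m) B g).
  { induction m as [|m IH]; intros Hm.
    - apply Ck_on_O. exact Hgc.
    - apply Ck_on_S. split.
      + intros t Ht. exists (/ Derive f (g t)). apply Hder, Ht.
      + apply (Ck_on_ext _ B (fun t => / Derive f (g t))); [exact HB| |].
        * intros t Ht. symmetry. apply is_derive_unique, Hder, Ht.
        * apply Cn_inv; [exact HB|intros t Ht; apply Hnz, Hinv, Ht|].
          apply (Cn_comp B HB m A); [intros t Ht; apply Hinv, Ht|apply IH; lia|].
          apply (Ck_on_le n); [lia|]. exact (proj2 (proj1 (Ck_on_S A n f) Hf)). }
  apply Hm. lia.
Qed.

Lemma Ck_on_local_inverse (k : smoothness) (A B : R -> Prop) (f g : R -> R) :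
  order_le 1 k -> open B ->
  (forall t, B t -> A (g t) /\ f (g t) = t) -> (forall t, B t -> continuous g t) ->
  Ck_on k A f -> (forall s, A s -> Derive f s <> 0) -> Ck_on k B g.
Proof.
  intros Hk HB Hinv Hgc Hf Hnz. apply Ck_on_Some. intros [|n] Hn.
  - apply Ck_on_O. exact Hgc.
  - apply (Cn_local_inverse n A B f g); auto. exact (proj1 (Ck_on_Some _ _ _) Hf (S n) Hn).
Qed.

(** * A smooth cutoff *)

Inductive is_poly : (R -> R) -> Prop :=
  | is_poly_const c : is_poly (fun _ => c)
  | is_poly_id : is_poly (fun u => u)
  | is_poly_plus p q : is_poly p -> is_poly q -> is_poly (fun u => p u + q u)
  | is_poly_mult p q : is_poly p -> is_poly q -> is_poly (fun u => p u * q u).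

Lemma is_poly_derive (p : R -> R) :
  is_poly p -> exists p', is_poly p' /\ forall u, is_derive p u (p' u).
Proof.
  induction 1 as [c| |p q _ [p' [Hp' Dp]] _ [q' [Hq' Dq]]|p q Hp [p' [Hp' Dp]] Hq [q' [Hq' Dq]]].
  - exists (fun _ => 0). split; [constructor|]. intros u. exact (is_derive_const c u).
  - exists (fun _ => 1). split; [constructor|]. intros u. exact (is_derive_id u).
  - exists (fun u => p' u + q' u). split; [constructor; auto|].
    intros u. exact (is_derive_plus p q u _ _ (Dp u) (Dq u)).
  - exists (fun u => p' u * q u + p u * q' u). split; [repeat constructor; auto|].
    intros u. exact (Derive.is_derive_mult p q u _ _ (Dp u) (Dq u)).
Qed.

Lemma is_poly_bound (p : R -> R) :
  is_poly p -> exists C m, 0 <= C /\ forall u, 1 <= u -> Rabs (p u) <= C * u ^ m.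
Proof.
  induction 1 as [c| |p q _ [C1 [m1 [HC1 H1]]] _ [C2 [m2 [HC2 H2]]]
                 |p q _ [C1 [m1 [HC1 H1]]] _ [C2 [m2 [HC2 H2]]]].
  - exists (Rabs c), 0%nat. split; [apply Rabs_pos|]. intros. simpl. lra.
  - exists 1, 1%nat. split; [lra|]. intros. simpl. rewrite Rabs_right; lra.
  - exists (C1 + C2), (m1 + m2)%nat. split; [lra|]. intros u Hu.
    pose proof (Rle_pow u m1 (m1 + m2) Hu ltac:(lia)).
    pose proof (Rle_pow u m2 (m1 + m2) Hu ltac:(lia)).
    pose proof (Rabs_triang (p u) (q u)). specialize (H1 u Hu). specialize (H2 u Hu).
    assert (C1 * u ^ m1 <= C1 * u ^ (m1 + m2)) by (apply Rmult_le_compat_l; auto).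
    assert (C2 * u ^ m2 <= C2 * u ^ (m1 + m2)) by (apply Rmult_le_compat_l; auto).
    lra.
  - exists (C1 * C2), (m1 + m2)%nat. split; [apply Rmult_le_pos; auto|]. intros u Hu.
    rewrite Rabs_mult, pow_add.
    replace (C1 * C2 * (u ^ m1 * u ^ m2)) with ((C1 * u ^ m1) * (C2 * u ^ m2)) by ring.
    apply Rmult_le_compat; auto using Rabs_pos.
Qed.

Lemma pow_le_fact_exp (m : nat) (u : R) : 0 <= u -> u ^ m <= INR (fact m) * exp u.
Proof.
  intros Hu.
  assert (Hf : 0 < INR (fact m)) by apply INR_fact_lt_0.
  assert (Hterm : u ^ m / INR (fact m) <= exp u).
  { eapply Rle_trans; [|exact (exp_ge_taylor u m Hu)].
    destruct m as [|m]; [simpl; lra|].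
    rewrite tech5.
    assert (0 <= sum_f_R0 (fun j => u ^ j / INR (fact j)) m); [|lra].
    apply cond_pos_sum. intros j.
    apply Rdiv_le_0_compat; [apply pow_le, Hu|apply INR_fact_lt_0]. }
  apply (Rmult_le_compat_l (INR (fact m))) in Hterm; [|lra].
  replace (INR (fact m) * (u ^ m / INR (fact m))) with (u ^ m) in Hterm by (field; lra).
  exact Hterm.
Qed.

Lemma poly_inv_exp_neg_inv_le (C : R) (m : nat) : 0 <= C -> exists K, 0 <= K /\
  forall t, 0 < t <= 1 -> C * (/ t) ^ m * exp (- / t) <= K * t.
Proof.
  intros HC. exists (C * INR (fact (S m))). split.
  { apply Rmult_le_pos; [exact HC|apply pos_INR]. }
  intros t Ht. set (u := / t).
  assert (Hu : 1 <= u) by (unfold u; rewrite <- Rinv_1; apply Rinv_le_contravar; lra).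
  assert (Htu : t * u = 1) by (unfold u; field; lra).
  pose proof (pow_le_fact_exp (S m) u ltac:(lra)) as H.
  rewrite exp_Ropp. pose proof (exp_pos u).
  apply (Rmult_le_reg_r (exp u * u)); [apply Rmult_lt_0_compat; lra|].
  replace (C * u ^ m * / exp u * (exp u * u)) with (C * u ^ (S m)) by (simpl; field; lra).
  replace (C * INR (fact (S m)) * t * (exp u * u))
    with (C * (INR (fact (S m)) * exp u) * (t * u)) by ring.
  rewrite Htu, Rmult_1_r. apply Rmult_le_compat_l; assumption.
Qed.

Definition poly_exp_neg_inv (p : R -> R) (t : R) : R :=
  if Rle_dec t 0 then 0 else p (/ t) * exp (- / t).

Lemma poly_exp_neg_inv_nonpos (p : R -> R) (t : R) : t <= 0 -> poly_exp_neg_inv p t = 0.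
Proof. intros Ht. unfold poly_exp_neg_inv. destruct (Rle_dec t 0); [reflexivity|lra]. Qed.

Lemma poly_exp_neg_inv_pos (p : R -> R) (t : R) :
  0 < t -> poly_exp_neg_inv p t = p (/ t) * exp (- / t).
Proof. intros Ht. unfold poly_exp_neg_inv. destruct (Rle_dec t 0); [lra|reflexivity]. Qed.

Lemma poly_exp_neg_inv_le (p : R -> R) : is_poly p -> exists K, 0 <= K /\
  forall t, 0 < t <= 1 -> Rabs (poly_exp_neg_inv p t) <= K * t.
Proof.
  intros Hp. destruct (is_poly_bound p Hp) as [C [m [HC Hb]]].
  destruct (poly_inv_exp_neg_inv_le C m HC) as [K [HK HKb]]. exists K. split; [exact HK|].
  intros t Ht. rewrite poly_exp_neg_inv_pos by lra.
  rewrite Rabs_mult, (Rabs_right (exp _)) by (apply Rle_ge, Rlt_le, exp_pos).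
  eapply Rle_trans; [|apply HKb; exact Ht].
  apply Rmult_le_compat_r; [apply Rlt_le, exp_pos|].
  apply Hb. rewrite <- Rinv_1. apply Rinv_le_contravar; lra.
Qed.

Lemma poly_exp_neg_inv_derive_0 (p : R -> R) :
  is_poly p -> is_derive (poly_exp_neg_inv p) 0 0.
Proof.
  intros Hp.
  destruct (poly_exp_neg_inv_le (fun u => u * p u)) as [K [HK HKb]];
    [repeat constructor; exact Hp|].
  apply is_derive_Reals. intros e He.
  assert (Hd : 0 < Rmin 1 (e / (K + 1))) by (apply Rmin_pos; [lra|apply Rdiv_lt_0_compat; lra]).
  exists (mkposreal _ Hd). intros h Hh Hhd. simpl in Hhd.
  pose proof (Rmin_l 1 (e / (K + 1))). pose proof (Rmin_r 1 (e / (K + 1))).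
  apply Rabs_def2 in Hhd.
  rewrite Rplus_0_l, (poly_exp_neg_inv_nonpos p 0) by lra.
  destruct (Rle_dec h 0).
  - rewrite poly_exp_neg_inv_nonpos by assumption.
    replace ((0 - 0) / h - 0) with 0 by (field; exact Hh). rewrite Rabs_R0. exact He.
  - specialize (HKb h ltac:(lra)). rewrite poly_exp_neg_inv_pos in HKb |- * by lra.
    replace ((p (/ h) * exp (- / h) - 0) / h - 0) with (/ h * p (/ h) * exp (- / h)) by (field; lra).
    apply (Rle_lt_trans _ (K * h)); [exact HKb|].
    assert (Hh' : h < e / (K + 1)) by lra.
    apply (Rmult_lt_compat_r (K + 1)) in Hh'; [|lra].
    unfold Rdiv in Hh'. rewrite Rmult_assoc, Rinv_l, Rmult_1_r in Hh' by lra.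
    nra.
Qed.

Lemma poly_exp_neg_inv_is_derive (p : R -> R) : is_poly p ->
  exists q, is_poly q /\ forall t, is_derive (poly_exp_neg_inv p) t (poly_exp_neg_inv q t).
Proof.
  intros Hp. destruct (is_poly_derive p Hp) as [p' [Hp' Dp]].
  exists (fun u => u * u * (p u + (-1) * p' u)). split; [repeat constructor; auto|].
  intros t. destruct (Rtotal_order t 0) as [Hlt|[->|Hgt]].
  - rewrite poly_exp_neg_inv_nonpos by lra.
    apply (is_derive_ext_loc (fun _ => 0)); [|exact (is_derive_const 0 t)].
    apply locally_Rabs. exists (- t). split; [lra|]. intros y Hy. apply Rabs_def2 in Hy.
    symmetry. apply poly_exp_neg_inv_nonpos. lra.
  - rewrite poly_exp_neg_inv_nonpos by lra. apply poly_exp_neg_inv_derive_0, Hp.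
  - rewrite poly_exp_neg_inv_pos by lra.
    apply (is_derive_ext_loc (fun y => p (/ y) * exp (- / y))).
    + apply locally_Rabs. exists t. split; [lra|]. intros y Hy. apply Rabs_def2 in Hy.
      symmetry. apply poly_exp_neg_inv_pos. lra.
    + auto_derive.
      * split; [exists (p' (/ t)); apply Dp|]. split; [lra|]. split; [lra|exact I].
      * replace (Derive (fun x => p x) (/ t)) with (p' (/ t)) by (symmetry; apply is_derive_unique, Dp).
        field. lra.
Qed.

Definition exp_neg_inv : R -> R := poly_exp_neg_inv (fun _ => 1).

Lemma exp_neg_inv_Derive_n (n : nat) : exists p, is_poly p /\
  Derive_n exp_neg_inv n = poly_exp_neg_inv p /\ forall t, ex_derive_n exp_neg_inv n t.
Proof.
  induction n as [|n [p [Hp [E Hex]]]].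
  - exists (fun _ => 1). split; [constructor|]. split; [reflexivity|]. intros; exact I.
  - destruct (poly_exp_neg_inv_is_derive p Hp) as [q [Hq Dq]].
    exists q. split; [exact Hq|]. split.
    + apply functional_extensionality. intros x.
      change (Derive (Derive_n exp_neg_inv n) x = poly_exp_neg_inv q x).
      rewrite E. apply is_derive_unique, Dq.
    + intros t. change (ex_derive (Derive_n exp_neg_inv n) t). rewrite E. eexists. apply Dq.
Qed.

Lemma exp_neg_inv_Ck (k : smoothness) (A : R -> Prop) : Ck_on k A exp_neg_inv.
Proof.
  intros n _ x _. destruct (exp_neg_inv_Derive_n n) as [p [Hp [E Hex]]].
  split; [apply Hex|]. rewrite E.
  destruct (poly_exp_neg_inv_is_derive p Hp) as [q [_ Dq]].
  exact (ex_derive_continuous _ x (ex_intro _ _ (Dq x))).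
Qed.

Lemma exp_neg_inv_nonpos (t : R) : t <= 0 -> exp_neg_inv t = 0.
Proof. apply poly_exp_neg_inv_nonpos. Qed.

Lemma exp_neg_inv_pos (t : R) : 0 < t -> 0 < exp_neg_inv t.
Proof. intros Ht. unfold exp_neg_inv. rewrite poly_exp_neg_inv_pos, Rmult_1_l by exact Ht. apply exp_pos. Qed.

Lemma exp_neg_inv_ge0 (t : R) : 0 <= exp_neg_inv t.
Proof.
  destruct (Rle_dec t 0); [rewrite exp_neg_inv_nonpos by assumption; lra|].
  apply Rlt_le, exp_neg_inv_pos. lra.
Qed.

Lemma exp_neg_inv_le (s t : R) : s <= t -> exp_neg_inv s <= exp_neg_inv t.
Proof.
  intros Hst. destruct (Rle_dec s 0); [rewrite exp_neg_inv_nonpos by assumption; apply exp_neg_inv_ge0|].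
  unfold exp_neg_inv. rewrite !poly_exp_neg_inv_pos, !Rmult_1_l by lra.
  destruct (Req_dec s t) as [->|Hne]; [lra|].
  apply Rlt_le, exp_increasing, Ropp_lt_contravar, Rinv_lt_contravar; nra.
Qed.

Definition smooth_cutoff (t : R) : R :=
  exp_neg_inv (1 - t) / (exp_neg_inv (1 - t) + exp_neg_inv t).

Lemma smooth_cutoff_denom_pos (t : R) : 0 < exp_neg_inv (1 - t) + exp_neg_inv t.
Proof.
  pose proof (exp_neg_inv_ge0 t). pose proof (exp_neg_inv_ge0 (1 - t)).
  destruct (Rle_dec t 0).
  - pose proof (exp_neg_inv_pos (1 - t) ltac:(lra)). lra.
  - pose proof (exp_neg_inv_pos t ltac:(lra)). lra.
Qed.

Lemma smooth_cutoff_Ck (k : smoothness) (A : R -> Prop) : Ck_on k A smooth_cutoff.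
Proof.
  apply (Ck_on_subset k (fun _ => True)); [trivial|].
  assert (Hrefl : Ck_on k (fun _ => True) (fun t => exp_neg_inv (1 - t))).
  { apply (Ck_on_comp k _ open_true (fun _ => True)); [trivial| |apply exp_neg_inv_Ck].
    apply (Ck_on_ext _ _ (fun t => -1 * t + 1)); [apply open_true|intros; ring|].
    apply Ck_on_scal_plus, Ck_on_id; apply open_true. }
  apply Ck_on_mult; [apply open_true|exact Hrefl|].
  apply Ck_on_inv; [apply open_true|intros t _; pose proof (smooth_cutoff_denom_pos t); lra|].
  apply Ck_on_plus; [apply open_true|exact Hrefl|apply exp_neg_inv_Ck].
Qed.

Lemma smooth_cutoff_le0 (t : R) : t <= 0 -> smooth_cutoff t = 1.
Proof.
  intros Ht. unfold smooth_cutoff. rewrite (exp_neg_inv_nonpos t Ht).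
  pose proof (exp_neg_inv_pos (1 - t) ltac:(lra)). field. lra.
Qed.

Lemma smooth_cutoff_ge1 (t : R) : 1 <= t -> smooth_cutoff t = 0.
Proof.
  intros Ht. unfold smooth_cutoff. rewrite (exp_neg_inv_nonpos (1 - t)) by lra.
  unfold Rdiv. ring.
Qed.

Lemma smooth_cutoff_bounds (t : R) : 0 <= smooth_cutoff t <= 1.
Proof.
  unfold smooth_cutoff. pose proof (smooth_cutoff_denom_pos t).
  pose proof (exp_neg_inv_ge0 t). pose proof (exp_neg_inv_ge0 (1 - t)).
  split.
  - apply Rdiv_le_0_compat; assumption.
  - apply (Rmult_le_reg_r (exp_neg_inv (1 - t) + exp_neg_inv t)); [exact H|].
    unfold Rdiv. rewrite Rmult_assoc, Rinv_l by lra. lra.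
Qed.

Lemma smooth_cutoff_noninc (s t : R) : s <= t -> smooth_cutoff t <= smooth_cutoff s.
Proof.
  intros Hst. unfold smooth_cutoff.
  pose proof (smooth_cutoff_denom_pos t). pose proof (smooth_cutoff_denom_pos s).
  pose proof (exp_neg_inv_le s t Hst). pose proof (exp_neg_inv_le (1 - t) (1 - s) ltac:(lra)).
  pose proof (exp_neg_inv_ge0 s). pose proof (exp_neg_inv_ge0 (1 - s)).
  set (a := exp_neg_inv (1 - t)) in *. set (b := exp_neg_inv t) in *.
  set (c := exp_neg_inv (1 - s)) in *. set (d := exp_neg_inv s) in *.
  apply (Rmult_le_reg_r ((a + b) * (c + d))); [nra|].
  replace (a / (a + b) * ((a + b) * (c + d))) with (a * (c + d)) by (field; lra).
  replace (c / (c + d) * ((a + b) * (c + d))) with (c * (a + b)) by (field; lra).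
  assert (a * d <= c * d) by (apply Rmult_le_compat_r; lra).
  assert (c * d <= c * b) by (apply Rmult_le_compat_l; lra).
  lra.
Qed.

Lemma is_derive_noninc_le0 (f : R -> R) (x l : R) :
  (forall s t, s <= t -> f t <= f s) -> is_derive f x l -> l <= 0.
Proof.
  intros Hf Hd. apply is_derive_Reals in Hd. destruct (Rle_dec l 0) as [|Hl]; [assumption|].
  destruct (Hd l ltac:(lra)) as [d Hd2].
  pose proof (cond_pos d).
  specialize (Hd2 (d / 2) ltac:(lra) ltac:(rewrite Rabs_right; lra)).
  pose proof (Hf x (x + d / 2) ltac:(lra)).
  assert ((f (x + d / 2) - f x) / (d / 2) <= 0).
  { unfold Rdiv. apply Rmult_le_0_r; [lra|]. apply Rlt_le, Rinv_0_lt_compat. lra. }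
  apply Rabs_def2 in Hd2. lra.
Qed.

Lemma smooth_cutoff_ex_derive (t : R) : ex_derive smooth_cutoff t.
Proof. exact (Ck_on_ex_derive (Some 1%nat) (fun _ => True) _ t (le_n 1) (smooth_cutoff_Ck _ _) I). Qed.

Lemma smooth_cutoff_Derive_le0 (t : R) : Derive smooth_cutoff t <= 0.
Proof.
  apply (is_derive_noninc_le0 smooth_cutoff t); [exact smooth_cutoff_noninc|].
  apply Derive_correct, smooth_cutoff_ex_derive.
Qed.

(** * Blending two functions *)

Definition blend (al be K : R) (u v : R -> R) (y : R) : R :=
  K + v y + smooth_cutoff (al * v y + be) * (u y - K - v y).

Lemma blend_cutoff_le0 (al be K : R) (u v : R -> R) (y : R) :
  al * v y + be <= 0 -> blend al be K u v y = u y.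
Proof. intros H. unfold blend. rewrite smooth_cutoff_le0 by exact H. ring. Qed.

Lemma blend_cutoff_ge1 (al be K : R) (u v : R -> R) (y : R) :
  1 <= al * v y + be -> blend al be K u v y = K + v y.
Proof. intros H. unfold blend. rewrite smooth_cutoff_ge1 by exact H. ring. Qed.

Lemma blend_transition (u v : R -> R) (K c e1 e2 b : R) :
  c < e1 -> e1 < e2 -> e2 < b -> (forall x y, c < x -> x < y -> y < b -> v x < v y) ->
  exists al be, 0 < al /\
    (forall y, c < y <= e1 -> blend al be K u v y = u y) /\
    (forall y, e2 <= y < b -> blend al be K u v y = K + v y).
Proof.
  intros H1 H2 H3 Hv.
  assert (Hv12 : v e1 < v e2) by (apply Hv; lra).
  set (al := / (v e2 - v e1)). exists al, (- al * v e1).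
  assert (Htau : forall y, al * v y + - al * v e1 = (v y - v e1) / (v e2 - v e1))
    by (intros y; unfold al; field; lra).
  split; [apply Rinv_0_lt_compat; lra|]. split.
  - intros y Hy. apply blend_cutoff_le0. rewrite Htau.
    unfold Rdiv. apply Rmult_le_0_r; [|apply Rlt_le, Rinv_0_lt_compat; lra].
    destruct (Req_dec y e1) as [->|]; [lra|]. assert (v y < v e1) by (apply Hv; lra). lra.
  - intros y Hy. apply blend_cutoff_ge1. rewrite Htau.
    apply (Rmult_le_reg_r (v e2 - v e1)); [lra|]. unfold Rdiv. rewrite Rmult_assoc, Rinv_l by lra.
    destruct (Req_dec y e2) as [->|]; [lra|]. assert (v e2 < v y) by (apply Hv; lra). lra.
Qed.

Lemma blend_Ck (k : smoothness) (A : R -> Prop) (al be K : R) (u v : R -> R) :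
  open A -> Ck_on k A u -> Ck_on k A v -> Ck_on k A (blend al be K u v).
Proof.
  intros HA Hu Hv. unfold blend.
  apply Ck_on_plus; [exact HA|apply Ck_on_plus; [exact HA|apply Ck_on_const|exact Hv]|].
  apply Ck_on_mult; [exact HA| |].
  - apply (Ck_on_comp k A HA (fun _ => True)); [trivial| |apply smooth_cutoff_Ck].
    apply Ck_on_scal_plus; assumption.
  - unfold Rminus.
    apply Ck_on_plus; [exact HA| |apply Ck_on_opp; [exact HA|exact Hv]].
    apply Ck_on_plus; [exact HA|exact Hu|apply Ck_on_const].
Qed.

Lemma blend_is_derive (al be K : R) (u v : R -> R) (s Du Dv : R) :
  is_derive u s Du -> is_derive v s Dv ->
  let t := al * v s + be in
  is_derive (blend al be K u v) s
    (Dv + smooth_cutoff t * (Du - Dv) + al * Dv * Derive smooth_cutoff t * (u s - K - v s)).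
Proof.
  intros Hu Hv t.
  pose proof (is_derive_plus (fun y => al * v y) (fun _ => be) s _ _
                (is_derive_scal v s al Dv Hv) (is_derive_const be s)) as Ht.
  pose proof (is_derive_comp smooth_cutoff (fun y => al * v y + be) s _ _
                (Derive_correct _ _ (smooth_cutoff_ex_derive t)) Ht) as Hc.
  pose proof (is_derive_minus (fun y => u y - K) v s _ _
                (is_derive_minus u (fun _ => K) s _ _ Hu (is_derive_const K s)) Hv) as Hd.
  pose proof (is_derive_plus (fun _ => K) v s _ _ (is_derive_const K s) Hv) as Hs.
  pose proof (is_derive_plus (fun y => K + v y)
                (fun y => smooth_cutoff (al * v y + be) * (u y - K - v y)) s _ _
                Hs (Derive.is_derive_mult _ _ s _ _ Hc Hd)) as Hb.
  unfold blend. refine (eq_ind _ (is_derive _ s) Hb _ _).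
  unfold plus, minus, opp, zero, scal, mult; simpl.
  unfold plus, mult; simpl. unfold t. ring.
Qed.

Lemma blend_derive_neq0 (al L Dl Du Dv w : R) :
  0 < al -> 0 <= L <= 1 -> Dl <= 0 -> 0 < Du * Dv -> w < 0 ->
  Dv + L * (Du - Dv) + al * Dv * Dl * w <> 0.
Proof.
  intros Hal HL HDl HDuv Hw Hz.
  assert (HDv : 0 < Dv * Dv) by (apply Rsqr_pos_lt; intro; subst; lra).
  assert (0 <= al * (Dv * Dv) * (Dl * w)) by (apply Rmult_le_pos; [nra|nra]).
  assert (0 < L * (Du * Dv) + (1 - L) * (Dv * Dv)).
  { destruct (Rle_lt_or_eq_dec 0 L (proj1 HL)) as [HL0|<-]; [|lra].
    assert (0 <= (1 - L) * (Dv * Dv)) by (apply Rmult_le_pos; lra). nra. }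
  assert ((Dv + L * (Du - Dv) + al * Dv * Dl * w) * Dv
          = al * (Dv * Dv) * (Dl * w) + L * (Du * Dv) + (1 - L) * (Dv * Dv)) by ring.
  rewrite Hz in H1. lra.
Qed.

Lemma blend_lt (al be K : R) (u v : R -> R) (x y : R) :
  0 < al -> u x < u y -> v x < v y -> u x < K + v x ->
  blend al be K u v x < blend al be K u v y.
Proof.
  intros Hal Hu Hv HK. unfold blend.
  set (cx := smooth_cutoff (al * v x + be)). set (cy := smooth_cutoff (al * v y + be)).
  assert (Hc : cy <= cx) by (apply smooth_cutoff_noninc; nra).
  pose proof (smooth_cutoff_bounds (al * v y + be)) as Hcy. fold cy in Hcy.
  assert (0 < (1 - cy) * (v y - v x) + cy * (u y - u x)).
  { destruct (Rle_lt_or_eq_dec 0 cy (proj1 Hcy)) as [Hcy0|<-]; [|lra].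
    assert (0 <= (1 - cy) * (v y - v x)) by (apply Rmult_le_pos; lra). nra. }
  assert (0 <= (cx - cy) * (K + v x - u x)) by (apply Rmult_le_pos; lra).
  lra.
Qed.

Lemma is_derive_comonotone (h1 h2 : R -> R) (s l1 l2 : R) :
  is_derive h1 s l1 -> is_derive h2 s l2 ->
  (forall d, 0 < d -> exists t, t <> s /\ Rabs (t - s) < d /\
     0 < (h1 t - h1 s) * (h2 t - h2 s)) ->
  0 <= l1 * l2.
Proof.
  intros H1 H2 H. destruct (Rle_dec 0 (l1 * l2)) as [|Hneg]; [assumption|exfalso].
  assert (Hl1 : l1 <> 0) by (intro; subst; lra).
  assert (Hl2 : l2 <> 0) by (intro; subst; lra).
  apply is_derive_Reals in H1. apply is_derive_Reals in H2.
  destruct (H1 (Rabs l1) (Rabs_pos_lt _ Hl1)) as [d1 Hd1].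
  destruct (H2 (Rabs l2) (Rabs_pos_lt _ Hl2)) as [d2 Hd2].
  destruct (H _ (Rmin_pos _ _ (cond_pos d1) (cond_pos d2))) as [t [Hts [Htd Hp]]].
  pose proof (Rmin_l d1 d2). pose proof (Rmin_r d1 d2).
  assert (Hh : t - s <> 0) by lra.
  specialize (Hd1 (t - s) Hh ltac:(lra)). specialize (Hd2 (t - s) Hh ltac:(lra)).
  replace (s + (t - s)) with t in Hd1, Hd2 by ring.
  set (q1 := (h1 t - h1 s) / (t - s)) in *. set (q2 := (h2 t - h2 s) / (t - s)) in *.
  (* each difference quotient has the sign of the corresponding derivative *)
  assert (A1 : 0 < q1 * l1).
  { apply Rabs_def2 in Hd1. destruct (Rlt_dec 0 l1).
    - rewrite Rabs_right in Hd1 by lra. nra.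
    - rewrite Rabs_left in Hd1 by lra. nra. }
  assert (A2 : 0 < q2 * l2).
  { apply Rabs_def2 in Hd2. destruct (Rlt_dec 0 l2).
    - rewrite Rabs_right in Hd2 by lra. nra.
    - rewrite Rabs_left in Hd2 by lra. nra. }
  assert (A3 : 0 < q1 * q2).
  { unfold q1, q2.
    replace ((h1 t - h1 s) / (t - s) * ((h2 t - h2 s) / (t - s)))
      with ((h1 t - h1 s) * (h2 t - h2 s) * / ((t - s) * (t - s))) by (field; auto).
    apply Rmult_lt_0_compat; [exact Hp|]. apply Rinv_0_lt_compat. nra. }
  assert (0 < (q1 * l1) * (q2 * l2)) by (apply Rmult_lt_0_compat; auto).
  assert ((q1 * l1) * (q2 * l2) = (q1 * q2) * (l1 * l2)) by ring.
  nra.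
Qed.

(** * Increasing functions *)

Definition incr_on (S : R -> Prop) (f : R -> R) : Prop :=
  forall x y, S x -> S y -> x < y -> f x < f y.

Lemma incr_on_subset (S1 S2 : R -> Prop) (f : R -> R) :
  (forall y, S2 y -> S1 y) -> incr_on S1 f -> incr_on S2 f.
Proof. intros H Hf x y Hx Hy Hxy. apply Hf; auto. Qed.

Lemma incr_on_glue (P : R -> Prop) (f : R -> R) (z : R) : P z ->
  incr_on (fun y => P y /\ y <= z) f -> incr_on (fun y => P y /\ z <= y) f -> incr_on P f.
Proof.
  intros Pz Hl Hr x y Px Py Hxy.
  destruct (Rle_dec y z); [apply Hl; try split; auto; lra|].
  destruct (Rle_dec z x); [apply Hr; try split; auto; lra|].
  apply (Rlt_trans _ (f z)); [apply Hl|apply Hr]; try split; auto; lra.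
Qed.

Lemma IVT_lt (f : R -> R) (a c y : R) : a < c ->
  (forall z, a <= z <= c -> continuous f z) -> f a < y < f c ->
  exists z, a < z < c /\ f z = y.
Proof.
  intros Hac Hf Hy.
  destruct (IVT_interv (fun z => f z - y) a c) as [z [Hz Ez]]; [|lra..|].
  - intros z Hz. apply continuity_pt_minus; [|apply continuity_pt_const; intros ? ?; reflexivity].
    apply continuity_pt_filterlim, Hf, Hz.
  - exists z. split; [|lra].
    destruct (Req_dec z a) as [->|]; [lra|]. destruct (Req_dec z c) as [->|]; [lra|]. lra.
Qed.

Section Continuous_injective.
Variables (f : R -> R) (a c : R).
Hypothesis Hac : a < c.
Hypothesis Hcont : forall z, a <= z <= c -> continuous f z.
Hypothesis Hinj : forall x y, a <= x <= c -> a <= y <= c -> f x = f y -> x = y.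
Hypothesis Hfac : f a < f c.

Lemma continuous_injective_between (p : R) : a < p < c -> f a < f p < f c.
Proof.
  intros Hp.
  assert (f a <> f p) by (intro E; apply Hinj in E; lra).
  assert (f p <> f c) by (intro E; apply Hinj in E; lra).
  split.
  - destruct (Rlt_dec (f a) (f p)) as [|Hn]; [assumption|exfalso].
    destruct (IVT_lt f p c (f a)) as [z [Hz Ez]]; [lra|intros; apply Hcont; lra|lra|].
    apply Hinj in Ez; lra.
  - destruct (Rlt_dec (f p) (f c)) as [|Hn]; [assumption|exfalso].
    destruct (IVT_lt f a p (f c)) as [z [Hz Ez]]; [lra|intros; apply Hcont; lra|lra|].
    apply Hinj in Ez; lra.
Qed.

Lemma continuous_injective_incr : incr_on (fun y => a <= y <= c) f.
Proof.
  intros x y Hx Hy Hxy.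
  assert (Hay : f a < f y).
  { destruct (Req_dec y c) as [->|]; [exact Hfac|]. apply continuous_injective_between. lra. }
  destruct (Req_dec x a) as [->|]; [exact Hay|].
  assert (Hx' : a < x < y) by lra.
  destruct (Rlt_dec (f x) (f y)) as [|Hn]; [assumption|exfalso].
  assert (f x <> f y) by (intro E; apply Hinj in E; lra).
  destruct (IVT_lt f a x (f y)) as [z [Hz Ez]]; [lra|intros; apply Hcont; lra|lra|].
  apply Hinj in Ez; lra.
Qed.

End Continuous_injective.

Lemma incr_inverse_continuous (f g : R -> R) :
  (forall x y, x < y -> f x < f y) -> (forall v, f (g v) = v) -> forall v, continuous g v.
Proof.
  intros Hf Hfg v. apply continuous_Rabs. intros e He. set (x0 := g v).
  assert (Hv : f x0 = v) by apply Hfg.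
  pose proof (Hf x0 (x0 + e) ltac:(lra)). pose proof (Hf (x0 - e) x0 ltac:(lra)).
  exists (Rmin (f (x0 + e) - v) (v - f (x0 - e))). split; [apply Rmin_pos; lra|].
  intros u Hu. pose proof (Rmin_l (f (x0 + e) - v) (v - f (x0 - e))).
  pose proof (Rmin_r (f (x0 + e) - v) (v - f (x0 - e))). apply Rabs_def2 in Hu.
  assert (g u < x0 + e).
  { destruct (Rlt_dec (g u) (x0 + e)) as [|Hn]; [assumption|exfalso].
    destruct (Req_dec (g u) (x0 + e)) as [E|Hne].
    - pose proof (Hfg u). rewrite E in H3. lra.
    - pose proof (Hf (x0 + e) (g u) ltac:(lra)). rewrite Hfg in H3. lra. }
  assert (x0 - e < g u).
  { destruct (Rlt_dec (x0 - e) (g u)) as [|Hn]; [assumption|exfalso].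
    destruct (Req_dec (g u) (x0 - e)) as [E|Hne].
    - pose proof (Hfg u). rewrite E in H4. lra.
    - pose proof (Hf (g u) (x0 - e) ltac:(lra)). rewrite Hfg in H4. lra. }
  apply Rabs_def1; lra.
Qed.

(** * Regular coordinates and the global chart *)

Lemma open_img_chart (V : R -> Prop) (psi : R -> R) (W : R -> Prop) :
  is_chart V psi -> open W -> (forall y, W y -> V y) -> open (img psi W).
Proof.
  intros [_ [_ [_ [Himg [psinv [Hinv Hcinv]]]]]] HW HWV.
  apply open_Rabs. intros t [z [Wz <-]].
  destruct (proj1 (open_Rabs _) Himg (psi z)) as [e1 [He1 H1]]; [exists z; auto|].
  destruct (proj1 (open_Rabs W) HW z Wz) as [e2 [He2 H2]].
  destruct (proj1 (continuous_Rabs psinv (psi z)) (Hcinv _ (ex_intro _ z (conj (HWV z Wz) eq_refl)))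
              e2 He2) as [d [Hd H3]].
  exists (Rmin e1 d). split; [apply Rmin_pos; auto|].
  intros t Ht. pose proof (Rmin_l e1 d). pose proof (Rmin_r e1 d).
  destruct (H1 t ltac:(lra)) as [z' [Vz' <-]].
  exists z'. split; [|reflexivity]. apply H2.
  specialize (H3 (psi z') ltac:(lra)). rewrite !Hinv in H3; auto.
Qed.

Section Regular.
Variables (k : smoothness) (I : Type) (U : I -> R -> Prop) (phi : I -> R -> R).
Hypothesis hk1 : order_le 1 k.
Hypothesis HA : Ck_atlas k I U phi.

Lemma atlas_open (i : I) : open (U i).
Proof. exact (proj1 (proj1 HA i)). Qed.

Lemma atlas_open_img (i : I) : open (img (phi i) (U i)).
Proof. exact (proj1 (proj2 (proj2 (proj2 (proj1 HA i))))). Qed.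

Lemma atlas_continuous (i : I) (x : R) : U i x -> continuous (phi i) x.
Proof. exact (proj1 (proj2 (proj2 (proj1 HA i))) x). Qed.

Lemma atlas_injective (i : I) (x y : R) : U i x -> U i y -> phi i x = phi i y -> x = y.
Proof. exact (proj1 (proj2 (proj1 HA i)) x y). Qed.

(* [f] is a local coordinate at [x] compatible with the atlas. *)
Definition regular_at (f : R -> R) (x : R) : Prop :=
  forall j, U j x -> exists (G : R -> R) (d e : R), 0 < d /\ 0 < e /\
    (forall y, Rabs (y - x) < d -> U j y /\ G (phi j y) = f y) /\
    Ck_on k (fun s => Rabs (s - phi j x) < e) G /\ Derive G (phi j x) <> 0.

Lemma regular_at_locally_eq (f g : R -> R) (x : R) : regular_at f x ->
  (exists d, 0 < d /\ forall y, Rabs (y - x) < d -> f y = g y) -> regular_at g x.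
Proof.
  intros Hf [d [Hd Heq]] j Hj. destruct (Hf j Hj) as [G [d1 [e [Hd1 [He [Hrep HG]]]]]].
  exists G, (Rmin d d1), e. split; [apply Rmin_pos; auto|]. split; [exact He|]. split; [|exact HG].
  intros y Hy. pose proof (Rmin_l d d1). pose proof (Rmin_r d d1).
  destruct (Hrep y ltac:(lra)) as [Uy E]. split; [exact Uy|]. rewrite E. apply Heq. lra.
Qed.

Lemma regular_at_continuous (f : R -> R) (x : R) : regular_at f x -> continuous f x.
Proof.
  intros Hf. destruct (proj2 (proj2 HA) x) as [j Hj].
  destruct (Hf j Hj) as [G [d [e [Hd [He [Hrep [HG _]]]]]]].
  apply (continuous_ext_loc _ (fun y => G (phi j y))).
  - apply locally_Rabs. exists d. split; [exact Hd|]. intros y Hy. apply (Hrep y Hy).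
  - apply continuous_comp; [apply atlas_continuous, Hj|].
    apply (ex_derive_continuous G), (Ck_on_ex_derive k _ G _ hk1 HG).
    rewrite Rminus_eq_0, Rabs_R0. exact He.
Qed.

Lemma regular_at_scal_plus (f : R -> R) (x a b : R) : a <> 0 ->
  regular_at f x -> regular_at (fun y => a * f y + b) x.
Proof.
  intros Ha Hf j Hj. destruct (Hf j Hj) as [G [d [e [Hd [He [Hrep [HG HDG]]]]]]].
  exists (fun s => a * G s + b), d, e. split; [exact Hd|]. split; [exact He|]. split; [|split].
  - intros y Hy. destruct (Hrep y Hy) as [Uy E]. split; [exact Uy|]. rewrite E. reflexivity.
  - apply Ck_on_scal_plus; [apply open_Rabs_ball|exact HG].
  - assert (Hex : ex_derive G (phi j x)).
    { apply (Ck_on_ex_derive k _ G _ hk1 HG). rewrite Rminus_eq_0, Rabs_R0. exact He. }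
    rewrite Derive_plus, Derive_const, Derive_scal;
      [|exact (ex_derive_scal G a (phi j x) Hex)|exact (ex_derive_const b (phi j x))].
    intro Hz. apply HDG. apply (Rmult_eq_reg_l a); lra.
Qed.

Lemma regular_at_chart (i : I) (y : R) : U i y -> regular_at (phi i) y.
Proof.
  intros Hy j Hj.
  destruct (proj1 (proj2 HA) j i) as [Hdis|[g [h [E1 [E2 [Cg Ch]]]]]];
    [exfalso; exact (Hdis y (conj Hj Hy))|].
  set (W := inter (U j) (U i)).
  assert (HW : open W) by (apply open_and; apply atlas_open).
  assert (HWj : open (img (phi j) W)).
  { apply (open_img_chart (U j)); [apply HA|exact HW|intros z [? ?]; auto]. }
  destruct (proj1 (open_Rabs W) HW y (conj Hj Hy)) as [d [Hd HdW]].
  destruct (proj1 (open_Rabs _) HWj (phi j y)) as [e [He HeW]];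
    [exists y; split; [split|]; auto|].
  exists g, d, e. split; [exact Hd|]. split; [exact He|]. split; [|split].
  - intros z Hz. destruct (HdW z Hz) as [Hzj Hzi]. split; [exact Hzj|]. apply E1; auto.
  - apply (Ck_on_subset k _ _ _ HeW Cg).
  - set (s := phi j y).
    assert (Xg : is_derive g s (Derive g s)).
    { apply Derive_correct, (Ck_on_ex_derive k _ g s hk1 Cg). exists y. split; [split|]; auto. }
    assert (Xh : is_derive h (g s) (Derive h (g s))).
    { apply Derive_correct, (Ck_on_ex_derive k _ h _ hk1 Ch).
      exists y. split; [split; auto|]. unfold s. rewrite E1; auto. }
    assert (Hid : is_derive (fun t => h (g t)) s 1).
    { apply (is_derive_ext_loc (fun t => t)); [|exact (is_derive_id s)].
      apply locally_Rabs. exists e. split; [exact He|].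
      intros t Ht. destruct (HeW t Ht) as [z [[Hzj Hzi] <-]]. rewrite E1, E2; auto. }
    pose proof (is_derive_unique _ _ _ (is_derive_comp h g s _ _ Xh Xg)) as D1.
    pose proof (is_derive_unique _ _ _ Hid) as D2.
    intro Hz. rewrite D2, Hz in D1. unfold scal in D1; simpl in D1. unfold mult in D1; simpl in D1.
    lra.
Qed.

Lemma chart_points_right (j : I) (x : R) : U j x -> forall d dl, 0 < d -> 0 < dl ->
  exists y, x < y < x + d /\ phi j y <> phi j x /\ Rabs (phi j y - phi j x) < dl.
Proof.
  intros Hj d dl Hd Hdl.
  destruct (proj1 (open_Rabs _) (atlas_open j) x Hj) as [r [Hr HrU]].
  destruct (proj1 (continuous_Rabs _ x) (atlas_continuous j x Hj) dl Hdl) as [eta [Heta Hc]].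
  set (y := x + Rmin d (Rmin r eta) / 2).
  assert (Hm : 0 < Rmin d (Rmin r eta)) by (repeat apply Rmin_pos; assumption).
  pose proof (Rmin_l d (Rmin r eta)). pose proof (Rmin_r d (Rmin r eta)).
  pose proof (Rmin_l r eta). pose proof (Rmin_r r eta).
  assert (Hyx : Rabs (y - x) < Rmin d (Rmin r eta)) by (unfold y; rewrite Rabs_right; lra).
  exists y. split; [unfold y; lra|]. split.
  - intro E. apply (atlas_injective j) in E; [unfold y in E; lra|apply HrU; lra|exact Hj].
  - apply Hc. lra.
Qed.

Lemma regular_at_blend (u v : R -> R) (al be K x : R) :
  0 < al -> regular_at u x -> regular_at v x ->
  (exists d, 0 < d /\ forall y, x < y < x + d -> u x < u y /\ v x < v y) ->
  u x < K + v x -> regular_at (blend al be K u v) x.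
Proof.
  intros Hal Hu Hv [di [Hdi Hinc]] HK j Hj.
  destruct (Hu j Hj) as [Gu [du [eu [Hdu [Heu [Ru [Cu Nu]]]]]]].
  destruct (Hv j Hj) as [Gv [dv [ev [Hdv [Hev [Rv [Cv Nv]]]]]]].
  set (s0 := phi j x) in *.
  assert (Hx0 : Rabs (x - x) = 0) by (rewrite Rminus_eq_0; apply Rabs_R0).
  assert (Eu : Gu s0 = u x) by (apply Ru; lra).
  assert (Ev : Gv s0 = v x) by (apply Rv; lra).
  exists (blend al be K Gu Gv), (Rmin du dv), (Rmin eu ev).
  pose proof (Rmin_l du dv). pose proof (Rmin_r du dv).
  pose proof (Rmin_l eu ev). pose proof (Rmin_r eu ev).
  split; [apply Rmin_pos; auto|]. split; [apply Rmin_pos; auto|]. split; [|split].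
  - intros y Hy. destruct (Ru y ltac:(lra)) as [Uy Ey]. destruct (Rv y ltac:(lra)) as [_ Ey'].
    split; [exact Uy|]. unfold blend. rewrite Ey, Ey'. reflexivity.
  - apply blend_Ck; [apply open_Rabs_ball|..].
    + apply (Ck_on_subset k (fun s => Rabs (s - s0) < eu)); [intros; lra|exact Cu].
    + apply (Ck_on_subset k (fun s => Rabs (s - s0) < ev)); [intros; lra|exact Cv].
  - assert (Hs0 : forall e, 0 < e -> Rabs (s0 - s0) < e) by (intros; rewrite Rminus_eq_0, Rabs_R0; lra).
    pose proof (Derive_correct _ _ (Ck_on_ex_derive k _ Gu s0 hk1 Cu (Hs0 eu Heu))) as Xu.
    pose proof (Derive_correct _ _ (Ck_on_ex_derive k _ Gv s0 hk1 Cv (Hs0 ev Hev))) as Xv.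
    assert (Hsign : 0 < Derive Gu s0 * Derive Gv s0).
    { assert (Hne : Derive Gu s0 * Derive Gv s0 <> 0) by (apply Rmult_integral_contrapositive; auto).
      enough (0 <= Derive Gu s0 * Derive Gv s0) by lra.
      apply (is_derive_comonotone Gu Gv s0 _ _ Xu Xv).
      intros dl Hdl.
      destruct (chart_points_right j x Hj (Rmin di (Rmin du dv)) dl) as [y [Hy [Hne' Hcl]]];
        [repeat apply Rmin_pos; auto|exact Hdl|].
      pose proof (Rmin_l di (Rmin du dv)). pose proof (Rmin_r di (Rmin du dv)).
      exists (phi j y). split; [exact Hne'|]. split; [exact Hcl|].
      assert (Hyx : Rabs (y - x) < Rmin du dv) by (rewrite Rabs_right; lra).
      rewrite (proj2 (Ru y ltac:(lra))), (proj2 (Rv y ltac:(lra))), Eu, Ev.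
      destruct (Hinc y ltac:(lra)). apply Rmult_lt_0_compat; lra. }
    rewrite (is_derive_unique _ _ _ (blend_is_derive al be K Gu Gv s0 _ _ Xu Xv)).
    apply blend_derive_neq0;
      [exact Hal|apply smooth_cutoff_bounds|apply smooth_cutoff_Derive_le0|exact Hsign|].
    rewrite Eu, Ev. lra.
Qed.

Lemma regular_at_const_plus (f : R -> R) (x b : R) :
  regular_at f x -> regular_at (fun y => b + f y) x.
Proof.
  intros Hf. apply (regular_at_locally_eq (fun y => 1 * f y + b)).
  - apply regular_at_scal_plus; [lra|exact Hf].
  - exists 1. split; [lra|]. intros. ring.
Qed.

Lemma regular_glue (P Q : R -> Prop) (u v : R -> R) (K c e1 e2 b : R) :
  c < e1 -> e1 < e2 -> e2 < b -> (forall y, c < y < b -> P y /\ Q y) ->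
  (forall y, P y -> y < b -> regular_at u y) -> incr_on (fun y => P y /\ y < b) u ->
  (forall y, Q y -> c < y -> regular_at v y) -> incr_on (fun y => Q y /\ c < y) v ->
  (forall y, e1 <= y <= e2 -> u y < K + v y) ->
  exists F, (forall y, P y -> Q y -> regular_at F y) /\ incr_on (fun y => P y /\ Q y) F /\
    (forall y, y <= e1 -> F y = u y) /\ (forall y, e2 <= y -> F y = K + v y).
Proof.
  intros H1 H2 H3 HPQ Hur Hui Hvr Hvi HuK.
  assert (Hu : forall x y, c < x -> x < y -> y < b -> u x < u y)
    by (intros x y ? ? ?; apply Hui; repeat split; try apply HPQ; lra).
  assert (Hv : forall x y, c < x -> x < y -> y < b -> v x < v y)
    by (intros x y ? ? ?; apply Hvi; repeat split; try apply HPQ; lra).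
  destruct (blend_transition u v K c e1 e2 b H1 H2 H3 Hv) as [al [be [Hal [HB1 HB2]]]].
  set (B := blend al be K u v) in *.
  set (F := fun y => if Rle_dec y e1 then u y else if Rle_dec e2 y then K + v y else B y).
  assert (F1 : forall y, y <= e1 -> F y = u y)
    by (intros y Hy; unfold F; destruct (Rle_dec y e1); [reflexivity|lra]).
  assert (F2 : forall y, e2 <= y -> F y = K + v y)
    by (intros y Hy; unfold F; destruct (Rle_dec y e1); [lra|]; destruct (Rle_dec e2 y); [reflexivity|lra]).
  assert (FB : forall y, c < y < b -> F y = B y).
  { intros y Hy. destruct (Rle_dec y e1); [rewrite F1, HB1 by lra; reflexivity|].
    destruct (Rle_dec e2 y); [rewrite F2, HB2 by lra; reflexivity|].
    unfold F. destruct (Rle_dec y e1); [lra|]. destruct (Rle_dec e2 y); [lra|reflexivity]. }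
  exists F. split; [|split; [|split; assumption]].
  - intros y Py Qy. destruct (Rlt_dec y e1); [|destruct (Rlt_dec e2 y)].
    + apply (regular_at_locally_eq u); [apply Hur; [exact Py|lra]|].
      exists (e1 - y). split; [lra|]. intros z Hz. apply Rabs_def2 in Hz. rewrite F1; lra.
    + apply (regular_at_locally_eq (fun z => K + v z));
        [apply regular_at_const_plus, Hvr; [exact Qy|lra]|].
      exists (y - e2). split; [lra|]. intros z Hz. apply Rabs_def2 in Hz. rewrite F2; lra.
    + apply (regular_at_locally_eq B).
      * apply regular_at_blend; [exact Hal|apply Hur; [exact Py|lra]|apply Hvr; [exact Qy|lra]| |apply HuK; lra].
        exists (b - y). split; [lra|]. intros z Hz. split; [apply Hu|apply Hv]; lra.
      * exists (Rmin (y - c) (b - y)). split; [apply Rmin_pos; lra|].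
        intros z Hz. pose proof (Rmin_l (y - c) (b - y)). pose proof (Rmin_r (y - c) (b - y)).
        apply Rabs_def2 in Hz. symmetry. apply FB. lra.
  - apply (incr_on_glue _ F e1); [apply HPQ; lra| |apply (incr_on_glue _ F e2); [repeat split; try apply HPQ; lra| |]].
    + intros x y [[Px _] Hx] [[Py _] Hy] Hxy. rewrite !F1 by lra. apply Hui; repeat split; auto; lra.
    + intros x y [[_ Hx1] Hx2] [[_ Hy1] Hy2] Hxy. rewrite !FB by lra.
      apply blend_lt; [exact Hal|apply Hu; lra|apply Hv; lra|apply HuK; lra].
    + intros x y [[[_ Qx] _] Hx] [[[_ Qy] _] Hy] Hxy. rewrite !F2 by lra.
      apply Rplus_lt_compat_l, Hvi; repeat split; auto; lra.
Qed.

Lemma regular_extend_right (P : R -> Prop) (f g : R -> R) (c e1 e2 b d M : R) :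
  c < e1 -> e1 < e2 -> e2 < b -> b < d -> (forall y, c < y -> P y) ->
  (forall y, P y -> y < b -> regular_at f y) -> incr_on (fun y => P y /\ y < b) f ->
  (forall y, c < y < d -> regular_at g y) -> incr_on (fun y => c < y < d) g ->
  exists F, (forall y, P y -> y < d -> regular_at F y) /\ incr_on (fun y => P y /\ y < d) F /\
    (forall y, y <= e1 -> F y = f y) /\ (forall y, e2 <= y < d -> M <= F y).
Proof.
  intros H1 H2 H3 H4 HP Hfr Hfi Hgr Hgi.
  assert (Hg : forall x y, c < x -> x <= y -> y < d -> g x <= g y).
  { intros x y ? ? ?. destruct (Req_dec x y) as [->|]; [lra|]. apply Rlt_le, Hgi; lra. }
  assert (Hf : forall x y, c < x -> x <= y -> y < b -> f x <= f y).
  { intros x y ? ? ?. destruct (Req_dec x y) as [->|]; [lra|].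
    apply Rlt_le, Hfi; repeat split; try apply HP; lra. }
  (* [K] makes [f < K + g] on [[e1, e2]] and [K + g >= M] beyond [e2]. *)
  set (K := Rmax (f e2 - g e1 + 1) (M - g e2)).
  pose proof (Rmax_l (f e2 - g e1 + 1) (M - g e2)). pose proof (Rmax_r (f e2 - g e1 + 1) (M - g e2)).
  destruct (regular_glue P (fun y => y < d) f g K c e1 e2 b) as [F [HFr [HFi [HF1 HF2]]]];
    try assumption.
  - intros y Hy. split; [apply HP|]; lra.
  - intros y Hy1 Hy2. apply Hgr. lra.
  - apply (incr_on_subset (fun y => c < y < d)); [intros y Hy; lra|exact Hgi].
  - intros y Hy. pose proof (Hf y e2 ltac:(lra) ltac:(lra) ltac:(lra)).
    pose proof (Hg e1 y ltac:(lra) ltac:(lra) ltac:(lra)). unfold K. lra.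
  - exists F. split; [exact HFr|]. split; [exact HFi|]. split; [exact HF1|].
    intros y Hy. rewrite HF2 by lra. pose proof (Hg e2 y ltac:(lra) ltac:(lra) ltac:(lra)). unfold K. lra.
Qed.

Lemma regular_extend_left (P : R -> Prop) (f g : R -> R) (c a e1 e2 d M : R) :
  c < a -> a < e1 -> e1 < e2 -> e2 < d -> (forall y, y < d -> P y) ->
  (forall y, P y -> a < y -> regular_at f y) -> incr_on (fun y => P y /\ a < y) f ->
  (forall y, c < y < d -> regular_at g y) -> incr_on (fun y => c < y < d) g ->
  exists F, (forall y, P y -> c < y -> regular_at F y) /\ incr_on (fun y => P y /\ c < y) F /\
    (forall y, e2 <= y -> F y = f y) /\ (forall y, c < y <= e1 -> F y <= - M).
Proof.
  intros H1 H2 H3 H4 HP Hfr Hfi Hgr Hgi.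
  assert (Hg : forall x y, c < x -> x <= y -> y < d -> g x <= g y).
  { intros x y ? ? ?. destruct (Req_dec x y) as [->|]; [lra|]. apply Rlt_le, Hgi; lra. }
  assert (Hf : forall x y, a < x -> x <= y -> y < d -> f x <= f y).
  { intros x y ? ? ?. destruct (Req_dec x y) as [->|]; [lra|].
    apply Rlt_le, Hfi; repeat split; try apply HP; lra. }
  set (K := Rmax (g e2 - f e1 + 1) (g e1 + M)).
  pose proof (Rmax_l (g e2 - f e1 + 1) (g e1 + M)). pose proof (Rmax_r (g e2 - f e1 + 1) (g e1 + M)).
  (* Glue with the roles exchanged: the lowered [g] on the left, [f] on the right. *)
  destruct (regular_glue (fun y => c < y) P (fun y => - K + g y) f 0 a e1 e2 d)
    as [F [HFr [HFi [HF1 HF2]]]]; try assumption.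
  - intros y Hy. split; [|apply HP]; lra.
  - intros y Hy1 Hy2. apply regular_at_const_plus, Hgr. lra.
  - intros x y [Hx1 Hx2] [Hy1 Hy2] Hxy. apply Rplus_lt_compat_l, Hgi; lra.
  - intros y Hy. pose proof (Hg y e2 ltac:(lra) ltac:(lra) ltac:(lra)).
    pose proof (Hf e1 y ltac:(lra) ltac:(lra) ltac:(lra)). unfold K. lra.
  - exists F. split; [intros y Py Hy; apply HFr; assumption|]. split.
    + apply (incr_on_subset (fun y => c < y /\ P y)); [tauto|exact HFi].
    + split; [intros y Hy; rewrite HF2 by lra; ring|].
      intros y Hy. rewrite HF1 by lra. pose proof (Hg y e1 ltac:(lra) ltac:(lra) ltac:(lra)).
      unfold K. lra.
Qed.

Lemma local_regular_incr (x : R) : exists d f, 0 < d /\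
  (forall y, Rabs (y - x) < d -> regular_at f y) /\ incr_on (fun y => x - d < y < x + d) f.
Proof.
  destruct (proj2 (proj2 HA) x) as [i Hi].
  destruct (proj1 (open_Rabs _) (atlas_open i) x Hi) as [r [Hr HrU]].
  set (a := x - r / 2). set (c := x + r / 2).
  assert (HU : forall z, a <= z <= c -> U i z) by (intros z Hz; apply HrU; unfold a, c in Hz; split_Rabs; lra).
  assert (Hinj : forall p q, a <= p <= c -> a <= q <= c -> phi i p = phi i q -> p = q)
    by (intros; apply (atlas_injective i); auto).
  assert (Hsub : forall y, x - r / 2 < y < x + r / 2 -> a <= y <= c) by (intros; unfold a, c; lra).
  exists (r / 2).
  destruct (Rlt_dec (phi i a) (phi i c)) as [Hlt|Hge].
  - exists (phi i). split; [lra|]. split.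
    + intros y Hy. apply regular_at_chart, HrU. lra.
    + apply (incr_on_subset _ _ _ Hsub), continuous_injective_incr; unfold a, c in *; try lra.
      * intros z Hz. apply atlas_continuous, HU, Hz.
      * exact Hinj.
  - assert (phi i a <> phi i c) by (intro E; apply Hinj in E; unfold a, c in *; lra).
    exists (fun y => - phi i y). split; [lra|]. split.
    + intros y Hy. apply (regular_at_locally_eq (fun y => -1 * phi i y + 0)).
      * apply regular_at_scal_plus; [lra|]. apply regular_at_chart, HrU. lra.
      * exists 1. split; [lra|]. intros. ring.
    + apply (incr_on_subset _ _ _ Hsub), continuous_injective_incr; unfold a, c in *; try lra.
      * intros z Hz. exact (continuous_comp (phi i) Ropp z (atlas_continuous i z (HU z Hz)) (continuous_Ropp _)).
      * intros p q Hp Hq E. apply Hinj; auto. lra.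
Qed.

Lemma regular_incr_interval (p q : R) : p < q ->
  exists g, (forall y, p < y < q -> regular_at g y) /\ incr_on (fun y => p < y < q) g.
Proof.
  intros Hpq.
  set (E := fun t => exists f,
         (forall y, p < y < t -> regular_at f y) /\ incr_on (fun y => p < y < t) f).
  assert (E_down : forall t t', E t -> t' <= t -> E t').
  { intros t t' [f [Hr Hi]] Ht. exists f. split; [intros y Hy; apply Hr; lra|].
    apply (incr_on_subset (fun y => p < y < t)); [intros y Hy; lra|exact Hi]. }
  destruct (classic (E q)) as [|Hq]; [assumption|exfalso].
  destruct (local_regular_incr p) as [d0 [f0 [Hd0 [Hr0 Hi0]]]].
  assert (E0 : E (p + d0)).
  { exists f0. split; [intros y Hy; apply Hr0; apply Rabs_def1; lra|].
    apply (incr_on_subset (fun y => p - d0 < y < p + d0)); [intros y Hy; lra|exact Hi0]. }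
  assert (Eb : bound E).
  { exists q. intros t Et. destruct (Rle_dec t q) as [|Hn]; [assumption|].
    exfalso. apply Hq, (E_down t); [exact Et|lra]. }
  destruct (completeness E Eb (ex_intro _ _ E0)) as [m [Hub Hlub]].
  pose proof (Hub _ E0) as Hm.
  destruct (local_regular_incr m) as [d1 [g [Hd1 [Hgr Hgi]]]].
  set (dd := Rmin d1 (m - p)).
  assert (Hdd : 0 < dd) by (apply Rmin_pos; lra).
  assert (Hdd1 : dd <= d1) by apply Rmin_l. assert (Hdd2 : dd <= m - p) by apply Rmin_r.
  assert (Ht : exists t, E t /\ m - dd / 2 < t).
  { apply NNPP. intros Hn. assert (m <= m - dd / 2); [|lra].
    apply Hlub. intros t Et. destruct (Rle_dec t (m - dd / 2)) as [|Hgt]; [assumption|].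
    exfalso. apply Hn. exists t. split; [exact Et|lra]. }
  destruct Ht as [t [[f [Hfr Hfi]] Htm]].
  assert (Htle : t <= m) by (apply Hub; exists f; auto).
  set (c := m - dd).
  destruct (regular_extend_right (fun y => p < y) f g c (c + (t - c) / 3) (c + 2 * (t - c) / 3)
              t (m + dd) 0) as [F [HFr [HFi _]]]; unfold c in *; try lra.
  - intros y Hy. lra.
  - intros y Hy Hyt. apply Hfr. lra.
  - apply (incr_on_subset (fun y => p < y < t)); [intros y Hy; lra|exact Hfi].
  - intros y Hy. apply Hgr. apply Rabs_def1; lra.
  - apply (incr_on_subset (fun y => m - d1 < y < m + d1)); [intros y Hy; lra|exact Hgi].
  - assert (Emd : E (m + dd)).
    { exists F. split; [intros y Hy; apply HFr; lra|].
      apply (incr_on_subset (fun y => p < y /\ y < m + dd)); [intros y Hy; lra|exact HFi]. }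
    pose proof (Hub _ Emd). lra.
Qed.

Definition stage (n : nat) (f : R -> R) : Prop :=
  (forall y, - INR n - 1 < y < INR n + 1 -> regular_at f y) /\
  incr_on (fun y => - INR n - 1 < y < INR n + 1) f /\
  f (- INR n - 1 / 4) <= - INR n /\ INR n <= f (INR n + 1 / 4).

Lemma stage_O : exists f, stage 0 f.
Proof.
  destruct (regular_incr_interval (-1) 1 ltac:(lra)) as [g [Hgr Hgi]].
  exists (fun y => - g 0 + g y). unfold stage. simpl INR.
  assert (Hi : incr_on (fun y => - 0 - 1 < y < 0 + 1) (fun y => - g 0 + g y)).
  { intros x y Hx Hy Hxy. apply Rplus_lt_compat_l, Hgi; lra. }
  split; [intros y Hy; apply regular_at_const_plus, Hgr; lra|]. split; [exact Hi|].
  pose proof (Hi (- 0 - 1 / 4) 0 ltac:(lra) ltac:(lra) ltac:(lra)).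
  pose proof (Hi 0 (0 + 1 / 4) ltac:(lra) ltac:(lra) ltac:(lra)).
  simpl in *. split; lra.
Qed.

Lemma stage_S (n : nat) (f : R -> R) : stage n f -> exists f', stage (S n) f' /\
  (forall y, - INR n - 1 / 4 <= y <= INR n + 1 / 4 -> f' y = f y).
Proof.
  intros [Hr [Hi _]]. unfold stage. rewrite S_INR. set (N := INR n) in *. assert (HN : 0 <= N) by apply pos_INR.
  destruct (regular_incr_interval N (N + 2) ltac:(lra)) as [g1 [Hg1r Hg1i]].
  destruct (regular_extend_right (fun y => - N - 1 < y) f g1 N (N + 1 / 4) (N + 1 / 2) (N + 1) (N + 2) (N + 1))
    as [F1 [HF1r [HF1i [HF1e HF1b]]]]; try lra.
  { intros y Hy. lra. }
  { intros y Hy1 Hy2. apply Hr. lra. }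
  { apply (incr_on_subset (fun y => - N - 1 < y < N + 1)); [intros y Hy; lra|exact Hi]. }
  { exact Hg1r. }
  { exact Hg1i. }
  destruct (regular_incr_interval (- N - 2) (- N) ltac:(lra)) as [g2 [Hg2r Hg2i]].
  destruct (regular_extend_left (fun y => y < N + 2) F1 g2 (- N - 2) (- N - 1) (- N - 1 / 2) (- N - 1 / 4) (- N) (N + 1))
    as [F2 [HF2r [HF2i [HF2e HF2b]]]]; try lra.
  { intros y Hy. lra. }
  { intros y Hy1 Hy2. apply HF1r; auto. }
  { apply (incr_on_subset (fun y => - N - 1 < y /\ y < N + 2)); [intros y Hy; lra|exact HF1i]. }
  { exact Hg2r. }
  { exact Hg2i. }
  exists F2. split; [split; [|split; [|split]]|].
  - intros y Hy. apply HF2r; lra.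
  - apply (incr_on_subset (fun y => y < N + 2 /\ - N - 2 < y)); [intros y Hy; lra|exact HF2i].
  - apply HF2b. lra.
  - rewrite HF2e by lra. apply HF1b. lra.
  - intros y Hy. rewrite HF2e, HF1e by lra. reflexivity.
Qed.

Fixpoint stages (n : nat) : {f : R -> R | stage n f} :=
  match n with
  | O => constructive_indefinite_description _ stage_O
  | S m =>
      let (f, Hf) := stages m in
      let (f', Hf') := constructive_indefinite_description _ (stage_S m f Hf) in
      exist _ f' (proj1 Hf')
  end.

Lemma stages_S (n : nat) (y : R) : - INR n - 1 / 4 <= y <= INR n + 1 / 4 ->
  proj1_sig (stages (S n)) y = proj1_sig (stages n) y.
Proof.
  intros Hy. simpl. destruct (stages n) as [f Hf].
  destruct (constructive_indefinite_description _ (stage_S n f Hf)) as [f' Hf'].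
  exact (proj2 Hf' y Hy).
Qed.

Lemma stages_le (n m : nat) (y : R) : (n <= m)%nat -> - INR n - 1 / 4 <= y <= INR n + 1 / 4 ->
  proj1_sig (stages m) y = proj1_sig (stages n) y.
Proof.
  intros Hnm Hy. induction Hnm as [|m Hnm IH]; [reflexivity|].
  rewrite stages_S; [exact IH|]. pose proof (le_INR _ _ Hnm). lra.
Qed.

Definition level (y : R) : nat := Z.to_nat (up (Rabs y)).

Lemma level_gt (y : R) : Rabs y < INR (level y).
Proof.
  unfold level. destruct (archimed (Rabs y)) as [H _].
  assert (H0 : (0 <= up (Rabs y))%Z) by (apply le_IZR; pose proof (Rabs_pos y); simpl; lra).
  rewrite INR_IZR_INZ, Z2Nat.id by exact H0. exact H.
Qed.

(* The stages agree near [y] from [level y] on, so this is their limit. *)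
Definition global_chart (y : R) : R := proj1_sig (stages (level y)) y.

Lemma global_chart_stages (m : nat) (y : R) : Rabs y <= INR m + 1 / 4 ->
  global_chart y = proj1_sig (stages m) y.
Proof.
  intros Hm. unfold global_chart. pose proof (level_gt y).
  destruct (le_dec (level y) m) as [Hle|Hgt].
  - symmetry. apply stages_le; [exact Hle|split_Rabs; lra].
  - apply stages_le; [lia|split_Rabs; lra].
Qed.

Lemma global_chart_regular (x : R) : regular_at global_chart x.
Proof.
  set (m := S (level x)). pose proof (level_gt x).
  assert (Hm : INR m = INR (level x) + 1) by apply S_INR.
  apply (regular_at_locally_eq (proj1_sig (stages m))).
  - apply (proj2_sig (stages m)). split_Rabs; lra.
  - exists 1. split; [lra|]. intros y Hy. symmetry. apply global_chart_stages. split_Rabs; lra.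
Qed.

Lemma global_chart_incr (x y : R) : x < y -> global_chart x < global_chart y.
Proof.
  intros Hxy. set (m := (level x + level y)%nat).
  pose proof (level_gt x). pose proof (level_gt y).
  assert (Hm : INR m = INR (level x) + INR (level y)) by apply plus_INR.
  pose proof (pos_INR (level x)). pose proof (pos_INR (level y)).
  rewrite (global_chart_stages m x), (global_chart_stages m y) by lra.
  apply (proj2_sig (stages m)); [split_Rabs; lra|split_Rabs; lra|exact Hxy].
Qed.

Lemma global_chart_surjective (v : R) : exists x, global_chart x = v.
Proof.
  pose proof (level_gt v). set (n := level v) in *. pose proof (pos_INR n).
  destruct (proj2 (proj2 (proj2_sig (stages n)))) as [Hlo Hhi].
  rewrite <- global_chart_stages in Hlo, Hhi by (split_Rabs; lra).
  destruct (IVT_lt global_chart (- INR n - 1 / 4) (INR n + 1 / 4) v) as [x [_ Hx]];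
    [lra|intros z _; apply regular_at_continuous, global_chart_regular|apply Rabs_def2 in H; split; lra|].
  exists x. exact Hx.
Qed.

Definition global_chart_inv (v : R) : R :=
  proj1_sig (constructive_indefinite_description _ (global_chart_surjective v)).

Lemma global_chart_inv_r (v : R) : global_chart (global_chart_inv v) = v.
Proof. exact (proj2_sig (constructive_indefinite_description _ (global_chart_surjective v))). Qed.

Lemma global_chart_inv_l (x : R) : global_chart_inv (global_chart x) = x.
Proof.
  pose proof (global_chart_inv_r (global_chart x)) as E.
  destruct (Rtotal_order (global_chart_inv (global_chart x)) x) as [Hlt|[|Hgt]]; [|assumption|];
    [apply global_chart_incr in Hlt|apply global_chart_incr in Hgt]; lra.
Qed.

Lemma global_chart_continuous (x : R) : continuous global_chart x.
Proof. apply regular_at_continuous, global_chart_regular. Qed.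

Lemma global_chart_inv_continuous (v : R) : continuous global_chart_inv v.
Proof. exact (incr_inverse_continuous _ _ global_chart_incr global_chart_inv_r v). Qed.

Lemma global_chart_homeomorphism : homeomorphism global_chart.
Proof.
  split; [exact global_chart_continuous|]. exists global_chart_inv.
  split; [exact global_chart_inv_l|]. split; [exact global_chart_inv_r|exact global_chart_inv_continuous].
Qed.

Lemma chart_to_global_Ck (i : I) (phiinv : R -> R) :
  (forall x, U i x -> phiinv (phi i x) = x) ->
  (forall t, img (phi i) (U i) t -> continuous phiinv t) ->
  Ck_on k (img (phi i) (inter (U i) (fun _ => True))) (fun t => global_chart (phiinv t)).
Proof.
  intros Hinv Hcinv. apply Ck_on_local. intros t [x0 [[Hx0 _] <-]].
  destruct (global_chart_regular x0 i Hx0) as [G [d [e [Hd [He [Hrep [HG _]]]]]]].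
  assert (Hs0 : img (phi i) (U i) (phi i x0)) by (exists x0; auto).
  destruct (proj1 (open_Rabs _) (atlas_open_img i) _ Hs0)
    as [e0 [He0 Himg]].
  destruct (proj1 (continuous_Rabs _ _) (Hcinv _ Hs0) d Hd) as [d1 [Hd1 Hc]].
  rewrite Hinv in Hc by exact Hx0.
  set (r := Rmin e (Rmin e0 d1)).
  assert (Hr : 0 < r) by (repeat apply Rmin_pos; assumption).
  assert (Hre : r <= e) by apply Rmin_l.
  assert (Hre0 : r <= e0) by (eapply Rle_trans; [apply Rmin_r|apply Rmin_l]).
  assert (Hrd : r <= d1) by (eapply Rle_trans; [apply Rmin_r|apply Rmin_r]).
  exists r. split; [exact Hr|].
  apply (Ck_on_ext k _ G); [apply open_Rabs_ball| |].
  - intros t Ht. destruct (Himg t ltac:(lra)) as [z [Uz <-]].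
    specialize (Hc (phi i z) ltac:(lra)). rewrite Hinv in Hc |- * by exact Uz.
    exact (proj2 (Hrep z Hc)).
  - apply (Ck_on_subset k (fun s => Rabs (s - phi i x0) < e)); [intros; lra|exact HG].
Qed.

Lemma global_to_chart_Ck (i : I) :
  Ck_on k (img global_chart (inter (fun _ => True) (U i))) (fun v => phi i (global_chart_inv v)).
Proof.
  apply Ck_on_local. intros v [x0 [[_ Hx0] <-]].
  destruct (global_chart_regular x0 i Hx0) as [G [d [e [Hd [He [Hrep [HG HDG]]]]]]].
  set (s0 := phi i x0) in *.
  assert (HDc : continuous (Derive G) s0).
  { apply (Ck_on_continuous_Derive k _ G s0 hk1 HG). rewrite Rminus_eq_0, Rabs_R0. exact He. }
  destruct (proj1 (continuous_Rabs _ _) HDc (Rabs (Derive G s0)) (Rabs_pos_lt _ HDG))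
    as [e1 [He1 HD]].
  set (e' := Rmin e e1).
  assert (He' : 0 < e') by (apply Rmin_pos; assumption).
  assert (He'e : e' <= e) by apply Rmin_l. assert (He'e1 : e' <= e1) by apply Rmin_r.
  set (g := fun v => phi i (global_chart_inv v)).
  assert (Hgc : continuous g (global_chart x0)).
  { apply (continuous_comp global_chart_inv (phi i)); [apply global_chart_inv_continuous|].
    rewrite global_chart_inv_l. apply atlas_continuous, Hx0. }
  destruct (proj1 (continuous_Rabs _ _) (global_chart_inv_continuous (global_chart x0)) d Hd)
    as [d1 [Hd1 Hc1]].
  destruct (proj1 (continuous_Rabs _ _) Hgc e' He') as [d2 [Hd2 Hc2]].
  unfold g in Hc2. rewrite global_chart_inv_l in Hc1, Hc2. fold s0 in Hc2.
  assert (HB : forall t, Rabs (t - global_chart x0) < Rmin d1 d2 ->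
             Rabs (global_chart_inv t - x0) < d /\ Rabs (g t - s0) < e').
  { intros t Ht. pose proof (Rmin_l d1 d2). pose proof (Rmin_r d1 d2).
    split; [apply Hc1|apply Hc2]; lra. }
  exists (Rmin d1 d2). split; [apply Rmin_pos; assumption|].
  apply (Ck_on_local_inverse k (fun s => Rabs (s - s0) < e') _ G g hk1 (open_Rabs_ball _ _)).
  - intros t Ht. destruct (HB t Ht) as [H1 H2]. split; [exact H2|].
    unfold g. rewrite (proj2 (Hrep _ H1)). apply global_chart_inv_r.
  - intros t Ht. apply (continuous_comp global_chart_inv (phi i)); [apply global_chart_inv_continuous|].
    apply atlas_continuous, (Hrep _ (proj1 (HB t Ht))).
  - apply (Ck_on_subset k (fun s => Rabs (s - s0) < e)); [intros; lra|exact HG].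
  - intros s Hs Hz. specialize (HD s ltac:(lra)).
    rewrite Hz, Rminus_0_l, Rabs_Ropp in HD. lra.
Qed.

Lemma global_chart_compatible (i : I) : Ck_compatible k (fun _ => True) global_chart (U i) (phi i).
Proof.
  destruct (proj2 (proj2 (proj2 (proj2 (proj1 HA i))))) as [phiinv [Hinv Hcinv]].
  right. exists (fun v => phi i (global_chart_inv v)), (fun t => global_chart (phiinv t)).
  split; [intros x _ _; rewrite global_chart_inv_l; reflexivity|].
  split; [intros x _ Hx; rewrite Hinv by exact Hx; reflexivity|].
  split; [apply global_to_chart_Ck|].
  apply (Ck_on_subset k (img (phi i) (inter (U i) (fun _ => True)))).
  - intros t [z [[_ Hz] <-]]. exists z. split; [split|]; auto.
  - apply chart_to_global_Ck; assumption.
Qed.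

End Regular.

(** * Compatibility and chain-like atlases *)

Lemma Ck_compatible_sym (k : smoothness) (A B : R -> Prop) (f g : R -> R) :
  Ck_compatible k A f B g -> Ck_compatible k B g A f.
Proof.
  assert (Hswap : forall h (C D : R -> Prop) t, img h (inter C D) t -> img h (inter D C) t)
    by (intros h C D t [z [[? ?] <-]]; exists z; split; [split|]; auto).
  intros [Hd|[g1 [h1 [E1 [E2 [C1 C2]]]]]].
  - left. intros x [Hx1 Hx2]. exact (Hd x (conj Hx2 Hx1)).
  - right. exists h1, g1. split; [intros; apply E2; auto|]. split; [intros; apply E1; auto|].
    split.
    + exact (Ck_on_subset k _ _ _ (Hswap g B A) C2).
    + exact (Ck_on_subset k _ _ _ (Hswap f B A) C1).
Qed.

Lemma Ck_compatible_subset (k : smoothness) (A B A' B' : R -> Prop) (f g : R -> R) :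
  (forall x, A' x -> A x) -> (forall x, B' x -> B x) ->
  Ck_compatible k A f B g -> Ck_compatible k A' f B' g.
Proof.
  intros HA HB [Hd|[g1 [h1 [E1 [E2 [C1 C2]]]]]].
  - left. intros x [H1 H2]. exact (Hd x (conj (HA x H1) (HB x H2))).
  - right. exists g1, h1. split; [intros; apply E1; auto|]. split; [intros; apply E2; auto|].
    assert (Himg : forall h t, img h (inter A' B') t -> img h (inter A B) t)
      by (intros h t [z [[? ?] <-]]; exists z; split; [split|]; auto).
    split; [exact (Ck_on_subset k _ _ _ (Himg f) C1)|exact (Ck_on_subset k _ _ _ (Himg g) C2)].
Qed.

Lemma Ck_compatible_same_map (k : smoothness) (A B : R -> Prop) (w : R -> R) :
  Ck_compatible k A w B w.
Proof.
  right. exists (fun x => x), (fun x => x).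
  split; [auto|]. split; [auto|]. split; apply Ck_on_id.
Qed.

Theorem atlas_global_chart (k : smoothness) (I : Type) (U : I -> R -> Prop) (phi : I -> R -> R) :
  valid_smoothness k -> Ck_atlas k I U phi ->
  exists w, homeomorphism w /\ forall i,
    Ck_compatible k (fun _ => True) w (U i) (phi i) /\ Ck_compatible k (U i) (phi i) (fun _ => True) w.
Proof.
  intros hk HA.
  assert (hk1 : order_le 1 k) by (destruct k; simpl in *; auto).
  exists (global_chart k I U phi hk1 HA). split; [apply global_chart_homeomorphism|].
  intros i. split; [|apply Ck_compatible_sym]; apply global_chart_compatible.
Qed.

Section Preimage_strips.
Variables (k : smoothness) (w winv : R -> R).
Hypothesis Hw : forall x, continuous w x.
Hypothesis Hl : forall x, winv (w x) = x.
Hypothesis Hr : forall y, w (winv y) = y.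
Hypothesis Hc : forall y, continuous winv y.

Definition preimage_strip (n : Z) (x : R) : Prop := IZR n < w x < IZR n + 2.

Lemma img_preimage (P : R -> Prop) (y : R) : img w (fun x => P (w x)) y <-> P y.
Proof.
  split; [intros [x [Px <-]]; exact Px|].
  intros Py. exists (winv y). rewrite Hr. split; [exact Py|reflexivity].
Qed.

Lemma open_preimage_itv (a b : R) : open (fun x => a < w x < b).
Proof.
  apply open_Rabs. intros x Hx.
  destruct (proj1 (continuous_Rabs w x) (Hw x) (Rmin (w x - a) (b - w x))) as [d [Hd Hwd]];
    [apply Rmin_pos; lra|].
  exists d. split; [exact Hd|]. intros y Hy. specialize (Hwd y Hy).
  pose proof (Rmin_l (w x - a) (b - w x)). pose proof (Rmin_r (w x - a) (b - w x)).
  apply Rabs_def2 in Hwd. lra.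
Qed.

Lemma preimage_strip_chart (n : Z) : is_chart (preimage_strip n) w.
Proof.
  split; [apply open_preimage_itv|]. split.
  { intros x y _ _ E. rewrite <- (Hl x), <- (Hl y), E. reflexivity. }
  split; [intros x _; apply Hw|]. split.
  - apply (open_ext (fun y => IZR n < y < IZR n + 2)); [|apply open_and; [apply open_gt|apply open_lt]].
    intros y. symmetry. apply (img_preimage (fun v => IZR n < v < IZR n + 2)).
  - exists winv. split; [intros x _; apply Hl|intros y _; apply Hc].
Qed.

Lemma preimage_strip_cover (x : R) : exists n, preimage_strip n x.
Proof.
  exists (up (w x) - 2)%Z. unfold preimage_strip. rewrite minus_IZR.
  destruct (archimed (w x)). simpl. lra.
Qed.

Lemma preimage_strip_joinable (n : Z) :
  Ck_joinable k (preimage_strip n) w (preimage_strip (n + 1)) w.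
Proof.
  split; [apply Ck_compatible_same_map|].
  exists (IZR n), (IZR n + 1), (IZR n + 2), (IZR n + 3).
  unfold preimage_strip, open_itv, inter, set_eq. rewrite plus_IZR. simpl.
  do 3 (split; [lra|]).
  split; [|split; [|split]]; intros y.
  - apply (img_preimage (fun v => IZR n < v < IZR n + 2)).
  - rewrite <- (img_preimage (fun v => IZR n + 1 < v < IZR n + 2)).
    split; intros [x [Hx <-]]; exists x; split; [lra|reflexivity|split; lra|reflexivity].
  - rewrite <- (img_preimage (fun v => IZR n + 1 < v < IZR n + 2)).
    split; intros [x [Hx <-]]; exists x; split; [lra|reflexivity|split; lra|reflexivity].
  - rewrite <- (img_preimage (fun v => IZR n + 1 < v < IZR n + 3)).
    split; intros [x [Hx <-]]; exists x; split; [lra|reflexivity|lra|reflexivity].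
Qed.

Lemma preimage_strip_chain_like : chain_like k preimage_strip (fun _ => w).
Proof.
  split; [split; [|split]|split].
  - exact preimage_strip_chart.
  - intros i j. apply Ck_compatible_same_map.
  - exact preimage_strip_cover.
  - exact preimage_strip_joinable.
  - intros i j Hji Hji1 x [Hj [Hi Hi1]]. unfold preimage_strip in *. rewrite plus_IZR in Hi1.
    assert (IZR j < IZR (i + 2)) by (rewrite plus_IZR; simpl; lra).
    assert (IZR (i - 1) < IZR j) by (rewrite minus_IZR; simpl; lra).
    apply lt_IZR in H. apply lt_IZR in H0. lia.
Qed.

End Preimage_strips.

Theorem theorem4p5 (k : smoothness) (hk : valid_smoothness k) :
  (forall (I : Type) (U : I -> R -> Prop) (phi : I -> R -> R),
     Ck_atlas k I U phi ->
     exists (V : Z -> R -> Prop) (psi : Z -> R -> R),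
       chain_like k V psi /\ atlases_compatible k I U phi Z V psi) /\
  (forall (V : Z -> R -> Prop) (psi : Z -> R -> R),
     chain_like k V psi ->
     exists w : R -> R, homeomorphism w /\
       forall i : Z, Ck_compatible k (fun _ => True) w (V i) (psi i) /\
                     Ck_compatible k (V i) (psi i) (fun _ => True) w).
Proof.
  split.
  - intros I U phi HA.
    destruct (atlas_global_chart k I U phi hk HA) as [w [[Hw [winv [Hl [Hr Hc]]]] Hcompat]].
    exists (preimage_strip w), (fun _ => w).
    split; [exact (preimage_strip_chain_like k w winv Hw Hl Hr Hc)|].
    intros i j. destruct (Hcompat i) as [C1 C2].
    split; [revert C2|revert C1]; apply Ck_compatible_subset; auto.
  - intros V psi [HA _]. exact (atlas_global_chart k Z V psi hk HA).
Qed.
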